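(* Let $\textnormal{R}\in\{\textnormal{ML},\textnormal{wML},\textnormal{C},\textnormal{S},\textnormal{CH},\textnormal{wCH}\}$, let $\omega\in\Omega$ be a path that is $\textnormal{R}$-random for a computable forecasting system $\varphi$, and let $\epsilon_1,\epsilon_2>0$. Then $\omega$ is $\textnormal{R}$-random for the interval forecast $\big[\liminf_{n\to\infty}\underline{\varphi}(\omega_{1:n})-\epsilon_1,\ \limsup_{n\to\infty}\overline{\varphi}(\omega_{1:n})+\epsilon_2\big]\cap[0,1].$
   Context: $\mathcal{X}=\{0,1\}$; $\Omega=\mathcal{X}^{\mathbb{N}}$ (paths); $\mathbb{S}=\bigcup_{n\geq0}\mathcal{X}^n$ (situations), $\square$ empty string, $|s|$ length, $\omega_{1:n}=(\omega_1,\dots,\omega_n)$, $\omega_{1:0}=\square$. $\mathcal{I}$: nonempty closed intervals $I\subseteq[0,1]$. A forecasting system is a map $\varphi:\mathbb{S}\to\mathcal{I}$, $\underline{\varphi}=\min\varphi$, $\overline{\varphi}=\max\varphi$; an interval forecast $I$ is identified with the constant forecasting system $s\mapsto I$. A real map $r$ on a countable effectively encoded set $\mathcal D$ is computable if there is a recursive $q:\mathcal{D}\times\mathbb{N}_0\to\mathbb{Q}$ with $|r(d)-q(d,n)|<2^{-n}$; lower semicomputable if there is a recursive $q$ with $q(d,n+1)\ge q(d,n)$ and $r(d)=\lim_nq(d,n)$. $\varphi$ computable if $\underline\varphi,\overline\varphi$ are. $\overline{E}_I(f)=\max_{p\in I}[pf(1)+(1-p)f(0)]$. A real process $F:\mathbb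 S\to\mathbb R$ is a supermartingale for $\varphi$ if $\overline{E}_{\varphi(s)}(F(s\,\cdot)-F(s))\le0$ for all $s$; a test supermartingale if also $F\ge0$, $F(\square)=1$. A multiplier process $D$ maps situations to gambles $\mathcal X\to\mathbb R$, generating $D^{\circledcirc}(x_1,\dots,x_n)=\prod_{k=0}^{n-1}D(x_{1:k})(x_{k+1})$; lower semicomputable if $(s,x)\mapsto D(s)(x)$ is. For path $\omega$ and forecasting system $\varphi$: ML-random if no lower semicomputable test supermartingale $T$ for $\varphi$ has $\limsup_nT(\omega_{1:n})=\infty$; wML-random if no test supermartingale for $\varphi$ of the form $D^{\circledcirc}$, $D$ lower semicomputable, has this; C-random if no computable test supermartingale for $\varphi$ has this; S-random if there is no computable test supermartingale $T$ for $\varphi$ and computable non-decreasing unbounded $\tau:\mathbb N_0\to\mathbb R_{\ge0}$ with $\limsup_n[T(\omega_{1:n})-\tau(n)]\ge0$; CH-random (resp. wCH-random) if for every recursive (resp. recursive and temporal, i.e. depending only on $|s|$) $S:\mathbb S\to\{0,1\}$ with $\sum_{k=0}^{n-1}S(\omega_{1:k})\to\infty$: $\liminf_n \frac{\sum_{k<n}S(\omega_{1:k})[\omega_{k+1}-\underline\varphi(\omega_{1:k})]}{\sum_{k<n}S(\omega_{1:k})}\ge0$ and $\limsup_n \frac{\sum_{k<n}S(\omega_{1:k})[\omega_{k+1}-\overline\varphi(\omega_{1:k})]}{\sum_{k<n}S(\omega_{1:k})}\le0$. *)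

From Stdlib Require Import Reals Lra List QArith Qreals Arith Cantor ZArith.
From Coquelicot Require Import Coquelicot.
Import ListNotations.
Open Scope R_scope.

(* X = {0,1} is represented by bool (true = 1, false = 0).
   A situation is a finite string (x_1,...,x_n) : list bool (x_1 first).
   A path omega is a map nat -> bool with omega_{k+1} = omega k. *)
Definition sit := list bool.
Definition path := nat -> bool.
Definition prefix (w : path) (n : nat) : sit := map w (seq 0 n).
Definition b2R (b : bool) : R := if b then 1 else 0.

Inductive prog : Type :=
| PZero : prog
| PSucc : prog
| PProj : nat -> prog
| PComp : prog -> list prog -> prog
| PPrec : prog -> prog -> prog
| PMu : prog -> prog.

Inductive eval : prog -> list nat -> nat -> Prop :=
| eZero v : eval PZero v 0
| eSucc x v : eval PSucc (x :: v) (S x)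
| eProj i v : (i < length v)%nat -> eval (PProj i) v (nth i v 0%nat)
| eComp f gs v ys y : evals gs v ys -> eval f ys y -> eval (PComp f gs) v y
| ePrec0 f g v y : eval f v y -> eval (PPrec f g) (0%nat :: v) y
| ePrecS f g n v r y :
    eval (PPrec f g) (n :: v) r -> eval g (n :: r :: v) y ->
    eval (PPrec f g) (S n :: v) y
| eMu f v n :
    eval f (n :: v) 0 ->
    (forall m, (m < n)%nat -> exists k, eval f (m :: v) (S k)) ->
    eval (PMu f) v n
with evals : list prog -> list nat -> list nat -> Prop :=
| esNil v : evals nil v nil
| esCons g gs v y ys : eval g v y -> evals gs v ys -> evals (g :: gs) v (y :: ys).

(* bijective binary encoding of situations into nat *)
Definition enc_sit (s : sit) : nat :=
  fold_left (fun (acc : nat) (b : bool) => 2 * acc + (if b then 2 else 1))%nat s 0%nat.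
(* surjective decoding of nat onto Z and onto Q *)
Definition zig (a : nat) : Z :=
  if Nat.even a then Z.of_nat (Nat.div2 a) else (- Z.of_nat (Nat.div2 (S a)))%Z.
Definition decQ (n : nat) : Q :=
  let (a, b) := Cantor.of_nat n in Qmake (zig a) (Pos.of_succ_nat b).

Definition recursive_bool {D : Type} (enc : D -> list nat) (S : D -> bool) : Prop :=
  exists p, forall d, eval p (enc d) (if S d then 1%nat else 0%nat).

Definition computable {D : Type} (enc : D -> list nat) (r : D -> R) : Prop :=
  exists (p : prog) (g : D -> nat -> nat),
    forall d n, eval p (enc d ++ [n]) (g d n) /\
                Rabs (r d - Q2R (decQ (g d n))) < / 2 ^ n.

Definition lower_semicomputable {D : Type} (enc : D -> list nat) (r : D -> R) : Prop :=
  exists (p : prog) (g : D -> nat -> nat),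
    (forall d n, eval p (enc d ++ [n]) (g d n)) /\
    (forall d n, Q2R (decQ (g d n)) <= Q2R (decQ (g d (S n)))) /\
    (forall d, is_lim_seq (fun n => Q2R (decQ (g d n))) (r d)).

Definition enc_S (s : sit) : list nat := [enc_sit s].
Definition enc_SX (sx : sit * bool) : list nat :=
  [enc_sit (fst sx); if snd sx then 1%nat else 0%nat].
Definition enc_N (n : nat) : list nat := [n].

(** * Forecasting systems: phi s = [lo s, hi s] *)
Definition forecasting_system (lo hi : sit -> R) : Prop :=
  forall s, 0 <= lo s /\ lo s <= hi s /\ hi s <= 1.
Definition computable_fs (lo hi : sit -> R) : Prop :=
  computable enc_S lo /\ computable enc_S hi.

(* upper expectation E_{[lo s,hi s]}(F(s .) - F(s)) <= 0, i.e. the max over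
   p in [lo s, hi s] of p f(1) + (1-p) f(0) is <= 0 *)
Definition supermartingale (lo hi : sit -> R) (F : sit -> R) : Prop :=
  forall s p, lo s <= p <= hi s ->
    p * (F (s ++ [true]) - F s) + (1 - p) * (F (s ++ [false]) - F s) <= 0.
Definition test_supermartingale (lo hi : sit -> R) (F : sit -> R) : Prop :=
  supermartingale lo hi F /\ (forall s, 0 <= F s) /\ F [] = 1.

Fixpoint mprod_aux (D : sit -> bool -> R) (s : sit) (k : nat) : R :=
  match k with
  | O => 1
  | S k' => mprod_aux D s k' * D (firstn k' s) (nth k' s false)
  end.
Definition mprod (D : sit -> bool -> R) (s : sit) : R := mprod_aux D s (length s).

Fixpoint psum (f : nat -> R) (n : nat) : R :=
  match n with O => 0 | S n' => psum f n' + f n' end.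

Definition ML_random (lo hi : sit -> R) (w : path) : Prop :=
  ~ exists T, lower_semicomputable enc_S T /\ test_supermartingale lo hi T /\
              LimSup_seq (fun n => T (prefix w n)) = p_infty.

Definition wML_random (lo hi : sit -> R) (w : path) : Prop :=
  ~ exists D : sit -> bool -> R,
      lower_semicomputable enc_SX (fun sx => D (fst sx) (snd sx)) /\
      test_supermartingale lo hi (mprod D) /\
      LimSup_seq (fun n => mprod D (prefix w n)) = p_infty.

Definition C_random (lo hi : sit -> R) (w : path) : Prop :=
  ~ exists T, computable enc_S T /\ test_supermartingale lo hi T /\
              LimSup_seq (fun n => T (prefix w n)) = p_infty.

Definition S_random (lo hi : sit -> R) (w : path) : Prop :=
  ~ exists (T : sit -> R) (tau : nat -> R),
      computable enc_S T /\ test_supermartingale lo hi T /\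
      computable enc_N tau /\ (forall n, 0 <= tau n) /\
      (forall n m, (n <= m)%nat -> tau n <= tau m) /\
      (forall M, exists n, tau n > M) /\
      Rbar_le 0 (LimSup_seq (fun n => T (prefix w n) - tau n)).

Definition sel_count (S : sit -> bool) (w : path) (n : nat) : R :=
  psum (fun k => b2R (S (prefix w k))) n.
Definition sel_avg (S : sit -> bool) (f : sit -> R) (w : path) (n : nat) : R :=
  psum (fun k => b2R (S (prefix w k)) * (b2R (w k) - f (prefix w k))) n
  / sel_count S w n.

Definition CH_condition (lo hi : sit -> R) (w : path) (S : sit -> bool) : Prop :=
  is_lim_seq (sel_count S w) p_infty ->
  Rbar_le 0 (LimInf_seq (sel_avg S lo w)) /\
  Rbar_le (LimSup_seq (sel_avg S hi w)) 0.

Definition CH_random (lo hi : sit -> R) (w : path) : Prop :=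
  forall S : sit -> bool, recursive_bool enc_S S -> CH_condition lo hi w S.

Definition temporal (S : sit -> bool) : Prop :=
  exists g : nat -> bool, forall s, S s = g (length s).

Definition wCH_random (lo hi : sit -> R) (w : path) : Prop :=
  forall S : sit -> bool, recursive_bool enc_S S -> temporal S -> CH_condition lo hi w S.

Inductive rnotion := ML | wML | C | Sch | CH | wCH.

Definition random (Rn : rnotion) (lo hi : sit -> R) (w : path) : Prop :=
  match Rn with
  | ML => ML_random lo hi w
  | wML => wML_random lo hi w
  | C => C_random lo hi w
  | Sch => S_random lo hi w
  | CH => CH_random lo hi w
  | wCH => wCH_random lo hi w
  end.

From Stdlib Require Import Reals Lra Lia List Arith Cantor QArith Qreals ZArith.
From Coquelicot Require Import Coquelicot.
Import ListNotations.

(* Let [c, d] be the widened interval. The forecasts along the path eventually lie strictly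
   inside [liminf lo - e1, limsup hi + e2], so a decidable test on rational approximations of
   [lo s] and [hi s] can certify [c <= lo s] and [hi s <= d] while holding on all long enough
   prefixes of the path. A test supermartingale [T] for [c, d] that wins on the path is then
   frozen: it stays at 1 until the prefix [σ] of the path beyond which the test always holds,
   follows [T / M] with [M >= T σ] after it, and stops moving as soon as the test fails. Where it
   moves, the forecast of [φ] lies inside [c, d], so the frozen process is a test supermartingale
   for [φ]; it keeps the computability of [T] and equals [T / M] along the path, hence wins too.
   Multiplier processes are frozen in the same way. For the Church notions, the selection
   averages for [c, d] and for [φ] differ by a bounded amount divided by a diverging count. *)

Open Scope nat_scope.

(** * Recursive functions *)

Definition computes (p : prog) (k : nat) (F : list nat -> nat) : Prop :=
  forall v, length v = k -> eval p v (F v).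
Definition recursive_fn (k : nat) (F : list nat -> nat) : Prop := exists p, computes p k F.
Definition recursive_pred (k : nat) (B : list nat -> bool) : Prop :=
  recursive_fn k (fun v => Nat.b2n (B v)).

Definition recursive1 (f : nat -> nat) : Prop := recursive_fn 1 (fun v => f (nth 0 v 0)).
Definition recursive2 (f : nat -> nat -> nat) : Prop :=
  recursive_fn 2 (fun v => f (nth 0 v 0) (nth 1 v 0)).
Definition recursive3 (f : nat -> nat -> nat -> nat) : Prop :=
  recursive_fn 3 (fun v => f (nth 0 v 0) (nth 1 v 0) (nth 2 v 0)).
Definition recursive_pred1 (b : nat -> bool) : Prop := recursive_pred 1 (fun v => b (nth 0 v 0)).

Lemma recursive_fn_ext k F G :
  recursive_fn k F -> (forall v, length v = k -> F v = G v) -> recursive_fn k G.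
Proof. intros [p Hp] E. exists p. intros v Hv. rewrite <- E by exact Hv. auto. Qed.

Lemma recursive1_ext f g : recursive1 f -> (forall x, f x = g x) -> recursive1 g.
Proof. intros Hf E. apply (recursive_fn_ext _ _ _ Hf). auto. Qed.

Lemma recursive2_ext f g : recursive2 f -> (forall x y, f x y = g x y) -> recursive2 g.
Proof. intros Hf E. apply (recursive_fn_ext _ _ _ Hf). auto. Qed.

Lemma recursive_fn_comp m F k Gs :
  recursive_fn m F -> length Gs = m -> List.Forall (recursive_fn k) Gs ->
  recursive_fn k (fun v => F (map (fun G => G v) Gs)).
Proof.
  intros [f Hf] HL HGs.
  assert (Hprogs : exists gs, forall v, length v = k -> evals gs v (map (fun G => G v) Gs)).
  { clear HL. induction HGs as [|G Gs [g Hg] _ [gs Hgs]].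
    - exists []. constructor.
    - exists (g :: gs). constructor; auto. }
  destruct Hprogs as [gs Hgs]. exists (PComp f gs). intros v Hv.
  econstructor; [apply Hgs, Hv|]. apply Hf. rewrite length_map. exact HL.
Qed.

Lemma recursive_fn_comp1 f k G :
  recursive1 f -> recursive_fn k G -> recursive_fn k (fun v => f (G v)).
Proof.
  intros Hf HG.
  exact (recursive_fn_comp 1 _ k [G] Hf eq_refl (List.Forall_cons _ HG (List.Forall_nil _))).
Qed.

Lemma recursive_fn_comp2 f k G1 G2 : recursive2 f -> recursive_fn k G1 -> recursive_fn k G2 ->
  recursive_fn k (fun v => f (G1 v) (G2 v)).
Proof.
  intros Hf H1 H2. exact (recursive_fn_comp 2 _ k [G1; G2] Hf eq_refl
    (List.Forall_cons _ H1 (List.Forall_cons _ H2 (List.Forall_nil _)))).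
Qed.

Lemma recursive_pred_comp1 b k G :
  recursive_pred1 b -> recursive_fn k G -> recursive_pred k (fun v => b (G v)).
Proof. intros Hb HG. exact (recursive_fn_comp1 (fun x => Nat.b2n (b x)) k G Hb HG). Qed.

Lemma recursive_proj i k : i < k -> recursive_fn k (fun v => nth i v 0).
Proof. intros Hi. exists (PProj i). intros v Hv. constructor. lia. Qed.

Lemma recursive_succ : recursive1 S.
Proof. exists PSucc. intros [|x [|y v]] Hv; try discriminate. constructor. Qed.

Lemma recursive_const c k : recursive_fn k (fun _ => c).
Proof.
  induction c as [|c IH].
  - exists PZero. intros v _. constructor.
  - exact (recursive_fn_comp1 S k _ recursive_succ IH).
Qed.

Lemma recursive_fn_prec k F G :
  recursive_fn k F -> recursive_fn (S (S k)) G ->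
  recursive_fn (S k)
    (fun v => nat_rect (fun _ => nat) (F (tl v)) (fun n r => G (n :: r :: tl v)) (hd 0 v)).
Proof.
  intros [f Hf] [g Hg]. exists (PPrec f g). intros [|n v] Hv; [discriminate|].
  injection Hv as Hv. simpl. induction n as [|n IH]; simpl.
  - constructor. auto.
  - econstructor; [exact IH|]. apply Hg. simpl. lia.
Qed.

Lemma recursive_iter c g : recursive2 g -> recursive1 (fun n => nat_rect (fun _ => nat) c g n).
Proof.
  intros Hg. eapply recursive_fn_ext; [apply (recursive_fn_prec 0 _ _ (recursive_const c 0) Hg)|].
  intros [|n []] Hv; try discriminate. reflexivity.
Qed.

Lemma recursive_iter_param f g : recursive1 f -> recursive3 g ->
  recursive2 (fun n x => nat_rect (fun _ => nat) (f x) (fun m r => g m r x) n).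
Proof.
  intros Hf Hg. eapply recursive_fn_ext; [apply (recursive_fn_prec 1 _ _ Hf Hg)|].
  intros [|n [|x []]] Hv; try discriminate. reflexivity.
Qed.

Lemma recursive_add : recursive2 Nat.add.
Proof.
  eapply recursive2_ext.
  - apply (recursive_iter_param (fun x => x) (fun m r x => S r)).
    + apply recursive_proj. lia.
    + apply (recursive_fn_comp1 S); [apply recursive_succ | apply recursive_proj; lia].
  - intros n x. induction n; simpl; auto.
Qed.

Lemma recursive_mul : recursive2 Nat.mul.
Proof.
  eapply recursive2_ext.
  - apply (recursive_iter_param (fun _ => 0) (fun m r x => r + x)).
    + exact (recursive_const 0 1).
    + apply (recursive_fn_comp2 Nat.add); [apply recursive_add | apply recursive_proj; lia ..].
  - intros n x. induction n; simpl; lia.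
Qed.

Lemma recursive_sub : recursive2 Nat.sub.
Proof.
  assert (Hsubr : recursive2 (fun n x => x - n)).
  { eapply recursive2_ext.
    - apply (recursive_iter_param (fun x => x) (fun m r x => pred r)).
      + apply recursive_proj. lia.
      + apply (recursive_fn_comp1 pred); [|apply recursive_proj; lia].
        eapply recursive1_ext; [apply (recursive_iter 0 (fun m r => m)), recursive_proj; lia|].
        intros []; reflexivity.
    - intros n x. induction n; simpl; lia. }
  exact (recursive_fn_comp2 _ 2 _ _ Hsubr (recursive_proj 1 2 ltac:(lia))
           (recursive_proj 0 2 ltac:(lia))).
Qed.

Lemma recursive_leb k F1 F2 : recursive_fn k F1 -> recursive_fn k F2 ->
  recursive_pred k (fun v => F1 v <=? F2 v).
Proof.
  intros H1 H2. eapply recursive_fn_ext.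
  - apply (recursive_fn_comp2 Nat.sub); [apply recursive_sub | apply (recursive_const 1) |].
    apply (recursive_fn_comp2 Nat.sub); [apply recursive_sub | exact H1 | exact H2].
  - intros v _. cbv beta. destruct (Nat.leb_spec (F1 v) (F2 v));
    destruct (F1 v - F2 v) eqn:E; simpl; lia.
Qed.

Lemma recursive_andb k B1 B2 : recursive_pred k B1 -> recursive_pred k B2 ->
  recursive_pred k (fun v => B1 v && B2 v).
Proof.
  intros H1 H2.
  eapply recursive_fn_ext; [apply (recursive_fn_comp2 Nat.mul _ _ _ recursive_mul H1 H2)|].
  intros v _. cbv beta. destruct (B1 v), (B2 v); reflexivity.
Qed.

Lemma recursive_negb k B : recursive_pred k B -> recursive_pred k (fun v => negb (B v)).
Proof.
  intros H. eapply recursive_fn_ext.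
  - apply (recursive_fn_comp2 Nat.sub); [apply recursive_sub | apply (recursive_const 1) | exact H].
  - intros v _. cbv beta. destruct (B v); reflexivity.
Qed.

Lemma recursive_orb k B1 B2 : recursive_pred k B1 -> recursive_pred k B2 ->
  recursive_pred k (fun v => B1 v || B2 v).
Proof.
  intros H1 H2. eapply recursive_fn_ext.
  - exact (recursive_negb _ _ (recursive_andb _ _ _ (recursive_negb _ _ H1) (recursive_negb _ _ H2))).
  - intros v _. cbv beta. destruct (B1 v), (B2 v); reflexivity.
Qed.

Lemma recursive_eqb k F1 F2 : recursive_fn k F1 -> recursive_fn k F2 ->
  recursive_pred k (fun v => F1 v =? F2 v).
Proof.
  intros H1 H2. eapply recursive_fn_ext;
    [apply (recursive_andb _ _ _ (recursive_leb _ _ _ H1 H2) (recursive_leb _ _ _ H2 H1))|].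
  intros v _. cbv beta. destruct (Nat.eqb_spec (F1 v) (F2 v)).
  - rewrite e, Nat.leb_refl. reflexivity.
  - destruct (Nat.leb_spec (F1 v) (F2 v)), (Nat.leb_spec (F2 v) (F1 v)); simpl; lia.
Qed.

Lemma recursive_ite k B F1 F2 : recursive_pred k B -> recursive_fn k F1 -> recursive_fn k F2 ->
  recursive_fn k (fun v => if B v then F1 v else F2 v).
Proof.
  intros HB H1 H2. eapply recursive_fn_ext.
  - apply (recursive_fn_comp2 Nat.add); [apply recursive_add | |].
    + apply (recursive_fn_comp2 Nat.mul _ _ _ recursive_mul HB H1).
    + apply (recursive_fn_comp2 Nat.mul _ _ _ recursive_mul (recursive_negb _ _ HB) H2).
  - intros v _. cbv beta. destruct (B v); simpl; lia.
Qed.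

Fixpoint count_below (m : nat) (f : nat -> bool) : nat :=
  match m with O => 0 | S m' => count_below m' f + Nat.b2n (f m') end.

Lemma map_nth_seq a k (w : list nat) : a + k = length w ->
  map (fun i => nth i w 0) (seq a k) = skipn a w.
Proof.
  intros Hw. apply nth_ext with (d := 0) (d' := 0).
  - rewrite length_map, length_seq, length_skipn. lia.
  - intros j Hj. rewrite length_map, length_seq in Hj.
    rewrite nth_skipn, nth_indep with (d' := nth 0 w 0) by (rewrite length_map, length_seq; exact Hj).
    rewrite (map_nth (fun i => nth i w 0) (seq a k) 0 j), seq_nth by exact Hj. reflexivity.
Qed.

Lemma recursive_projs k a : List.Forall (recursive_fn (a + k)) (map (fun i v => nth i v 0) (seq a k)).
Proof.
  apply Forall_map, Forall_forall. intros i Hi. apply in_seq in Hi. apply recursive_proj. lia.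
Qed.

Lemma recursive_count k B M : recursive_pred (S k) B -> recursive_fn k M ->
  recursive_fn k (fun v => count_below (M v) (fun j => B (j :: v))).
Proof.
  intros HB HM.
  assert (Hstep : recursive_fn (S (S k))
            (fun w => nth 1 w 0 + Nat.b2n (B (nth 0 w 0 :: skipn 2 w)))).
  { apply (recursive_fn_comp2 Nat.add); [apply recursive_add | apply recursive_proj; lia |].
    eapply recursive_fn_ext.
    - apply (recursive_fn_comp (S k) _ _
               ((fun w => nth 0 w 0) :: map (fun i v => nth i v 0) (seq 2 k)) HB).
      + cbn [length]. rewrite length_map, length_seq. reflexivity.
      + constructor; [apply recursive_proj; lia | apply (recursive_projs k 2)].
    - intros w Hw. cbn [map]. rewrite map_map, map_nth_seq by (simpl; lia). reflexivity. }
  pose proof (recursive_fn_prec k _ _ (recursive_const 0 k) Hstep) as Hcount.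
  eapply recursive_fn_ext.
  - apply (recursive_fn_comp (S k) _ _ (M :: map (fun i v => nth i v 0) (seq 0 k)) Hcount).
    + cbn [length]. rewrite length_map, length_seq. reflexivity.
    + constructor; [exact HM | apply (recursive_projs k 0)].
  - intros v Hv. cbn [map hd tl]. rewrite map_map, map_nth_seq by (simpl; lia). simpl.
    induction (M v) as [|m IH]; simpl; congruence.
Qed.

Lemma count_below_ext m f g : (forall j, j < m -> f j = g j) -> count_below m f = count_below m g.
Proof. induction m; simpl; intros; auto. rewrite IHm, H; auto. Qed.

Lemma count_below_lt m K : count_below m (fun j => j <? K) = Nat.min m K.
Proof.
  induction m; [reflexivity|]. cbn [count_below]. rewrite IHm.
  cbv beta. destruct (Nat.ltb_spec m K); cbn [Nat.b2n]; lia.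
Qed.

Lemma count_below_zero m f : count_below m f = 0 <-> (forall j, j < m -> f j = false).
Proof.
  induction m as [|m IH]; simpl; split; intros H; try lia.
  - intros j Hj. destruct (f m) eqn:E; simpl in H; [lia|].
    assert (j < m \/ j = m) as [|] by lia; subst; auto. apply IH; [lia | auto].
  - rewrite H by lia. simpl. rewrite Nat.add_0_r. apply IH. intros. apply H. lia.
Qed.

Lemma count_below_mono m f g :
  (forall k, k < m -> f k = true -> g k = true) -> count_below m f <= count_below m g.
Proof.
  induction m; intros H; cbn [count_below]; auto.
  assert (count_below m f <= count_below m g) by (apply IHm; auto).
  destruct (f m) eqn:Ef, (g m) eqn:Eg; simpl; try lia.
  rewrite (H m ltac:(lia) Ef) in Eg. discriminate.
Qed.

Lemma count_below_ge m n : count_below m (fun k => n <=? k) = m - n.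
Proof.
  induction m; [reflexivity|]. cbn [count_below]. rewrite IHm.
  cbv beta. destruct (Nat.leb_spec n m); cbn [Nat.b2n]; lia.
Qed.

Lemma recursive_even : recursive_pred1 Nat.even.
Proof.
  change (recursive1 (fun n => Nat.b2n (Nat.even n))). eapply recursive1_ext.
  - apply (recursive_iter 1 (fun m r => 1 - r)).
    apply (recursive_fn_comp2 Nat.sub);
      [apply recursive_sub | apply (recursive_const 1) | apply recursive_proj; lia].
  - intros n. induction n as [|n IH]; [reflexivity|]. cbn [nat_rect]. rewrite IH.
    rewrite Nat.even_succ, <- Nat.negb_even. destruct (Nat.even n); reflexivity.
Qed.

Lemma recursive_odd : recursive_pred1 Nat.odd.
Proof.
  eapply recursive_fn_ext; [apply recursive_negb, recursive_even|].
  intros v _. cbv beta. rewrite Nat.negb_even. reflexivity.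
Qed.

Lemma recursive_div2 : recursive1 Nat.div2.
Proof.
  eapply recursive1_ext.
  - apply (recursive_iter 0 (fun m r => r + Nat.b2n (Nat.odd m))).
    apply (recursive_fn_comp2 Nat.add); [apply recursive_add | apply recursive_proj; lia |].
    apply (recursive_pred_comp1 Nat.odd); [apply recursive_odd | apply recursive_proj; lia].
  - intros n. pose proof (Nat.div2_odd n).
    enough (2 * nat_rect (fun _ => nat) 0 (fun m r => r + Nat.b2n (Nat.odd m)) n
            + Nat.b2n (Nat.odd n) = n) by lia.
    clear. induction n as [|n IH]; [reflexivity|]. simpl nat_rect.
    rewrite Nat.odd_succ, <- Nat.negb_odd. destruct (Nat.odd n); simpl in *; lia.
Qed.

Definition triangle (k : nat) : nat := nat_rect (fun _ => nat) 0 (fun i m => S i + m) k.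

Lemma recursive_triangle : recursive1 triangle.
Proof.
  apply recursive_iter.
  apply (recursive_fn_comp2 Nat.add); [apply recursive_add | | apply recursive_proj; lia].
  apply (recursive_fn_comp1 S); [apply recursive_succ | apply recursive_proj; lia].
Qed.

Lemma triangle_mono a b : a <= b -> triangle a <= triangle b.
Proof. induction 1; auto. simpl. lia. Qed.

Lemma triangle_ge k : k <= triangle k.
Proof. induction k; auto. simpl. lia. Qed.

(* [Cantor.of_nat c = (x, y)] satisfies [c = y + triangle (y + x)], and the diagonal [y + x]
   is the number of [m] with [triangle (m + 1) <= c]. *)
Definition unpair_diag (c : nat) : nat := count_below (S c) (fun m => triangle (S m) <=? c).
Definition unpair_snd (c : nat) : nat := c - triangle (unpair_diag c).
Definition unpair_fst (c : nat) : nat := unpair_diag c - unpair_snd c.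

Lemma cantor_of_nat_unpair c : Cantor.of_nat c = (unpair_fst c, unpair_snd c).
Proof.
  destruct (Cantor.of_nat c) as [x y] eqn:E.
  assert (Hc : c = y + triangle (y + x)).
  { rewrite <- (Cantor.cancel_to_of c), E. reflexivity. }
  assert (Hdiag : unpair_diag c = y + x).
  { unfold unpair_diag. rewrite (count_below_ext _ _ (fun j => j <? y + x)).
    - rewrite count_below_lt. pose proof (triangle_ge (y + x)). lia.
    - intros j _. destruct (Nat.ltb_spec j (y + x)).
      + apply Nat.leb_le. pose proof (triangle_mono (S j) (y + x)). lia.
      + apply Nat.leb_gt. pose proof (triangle_mono (S (y + x)) (S j)). simpl in *. lia. }
  unfold unpair_fst, unpair_snd. rewrite Hdiag. f_equal; lia.
Qed.

Lemma recursive_unpair_diag : recursive1 unpair_diag.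
Proof.
  apply (recursive_count 1 (fun w => triangle (S (nth 0 w 0)) <=? nth 1 w 0) (fun v => S (nth 0 v 0))).
  - apply recursive_leb; [|apply recursive_proj; lia].
    apply (recursive_fn_comp1 triangle); [apply recursive_triangle|].
    apply (recursive_fn_comp1 S); [apply recursive_succ | apply recursive_proj; lia].
  - apply (recursive_fn_comp1 S); [apply recursive_succ | apply recursive_proj; lia].
Qed.

Lemma recursive_unpair_snd : recursive1 unpair_snd.
Proof.
  apply (recursive_fn_comp2 Nat.sub); [apply recursive_sub | apply recursive_proj; lia |].
  apply (recursive_fn_comp1 triangle); [apply recursive_triangle|].
  apply (recursive_fn_comp1 unpair_diag); [apply recursive_unpair_diag | apply recursive_proj; lia].
Qed.

Lemma recursive_unpair_fst : recursive1 unpair_fst.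
Proof.
  apply (recursive_fn_comp2 Nat.sub); [apply recursive_sub | |].
  - apply (recursive_fn_comp1 unpair_diag); [apply recursive_unpair_diag | apply recursive_proj; lia].
  - apply (recursive_fn_comp1 unpair_snd); [apply recursive_unpair_snd | apply recursive_proj; lia].
Qed.

Lemma recursive_cantor_pair : recursive2 (fun x y => Cantor.to_nat (x, y)).
Proof.
  change (recursive2 (fun x y => y + triangle (y + x))).
  apply (recursive_fn_comp2 Nat.add); [apply recursive_add | apply recursive_proj; lia |].
  apply (recursive_fn_comp1 triangle); [apply recursive_triangle|].
  apply (recursive_fn_comp2 Nat.add); [apply recursive_add | apply recursive_proj; lia ..].
Qed.

Lemma firstn_snoc_le (s : sit) x k : k <= length s -> firstn k (s ++ [x]) = firstn k s.
Proof. intros Hk. rewrite firstn_app. replace (k - length s) with 0 by lia. apply app_nil_r. Qed.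

Lemma enc_sit_snoc s b : enc_sit (s ++ [b]) = 2 * enc_sit s + (if b then 2 else 1).
Proof. unfold enc_sit. rewrite fold_left_app. simpl. lia. Qed.

Definition enc_parent (e : nat) : nat := Nat.div2 (e - 1).

Lemma enc_parent_snoc s b : enc_parent (enc_sit (s ++ [b])) = enc_sit s.
Proof.
  rewrite enc_sit_snoc. unfold enc_parent. destruct b.
  - replace (2 * enc_sit s + 2 - 1) with (S (2 * enc_sit s)) by lia. apply Nat.div2_succ_double.
  - replace (2 * enc_sit s + 1 - 1) with (2 * enc_sit s) by lia. apply Nat.div2_double.
Qed.

Lemma enc_parent_spec e : 0 < e -> e = 2 * enc_parent e + (if Nat.even e then 2 else 1).
Proof.
  intros He. unfold enc_parent. destruct e as [|e]; [lia|]. replace (S e - 1) with e by lia.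
  rewrite Nat.even_succ, (Nat.div2_odd e) at 1. destruct (Nat.odd e); simpl; lia.
Qed.

Lemma even_enc_sit_snoc s b : Nat.even (enc_sit (s ++ [b])) = b.
Proof.
  rewrite enc_sit_snoc. destruct b.
  - replace (2 * enc_sit s + 2) with (2 * (enc_sit s + 1)) by lia. apply Nat.even_mul.
  - replace (2 * enc_sit s + 1) with (S (2 * enc_sit s)) by lia.
    rewrite Nat.even_succ. apply Nat.odd_mul.
Qed.

Lemma length_le_enc_sit s : length s <= enc_sit s.
Proof.
  induction s as [|b s IH] using rev_ind; simpl; auto.
  rewrite enc_sit_snoc, length_app. simpl. destruct b; lia.
Qed.

Lemma enc_sit_pos s : s <> [] -> 0 < enc_sit s.
Proof.
  intros H. destruct s as [|b s] using rev_ind; [congruence|]. rewrite enc_sit_snoc. destruct b; lia.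
Qed.

(* The fuel [e] suffices since decoding strictly decreases the code. *)
Fixpoint dec_sit_fuel (fuel e : nat) : sit :=
  match fuel with
  | O => []
  | S f => if e =? 0 then [] else dec_sit_fuel f (enc_parent e) ++ [Nat.even e]
  end.
Definition dec_sit (e : nat) : sit := dec_sit_fuel e e.

Lemma enc_dec_sit_fuel f e : e <= f -> enc_sit (dec_sit_fuel f e) = e.
Proof.
  revert e. induction f as [|f IH]; intros e Hf; simpl.
  - assert (e = 0) by lia. subst. reflexivity.
  - destruct (Nat.eqb_spec e 0); [subst; reflexivity|].
    assert (enc_parent e < e) by (pose proof (enc_parent_spec e); lia).
    rewrite enc_sit_snoc, IH by lia. symmetry. apply enc_parent_spec. lia.
Qed.

Lemma enc_dec_sit e : enc_sit (dec_sit e) = e.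
Proof. apply enc_dec_sit_fuel. lia. Qed.

Lemma dec_sit_fuel_enc f s : enc_sit s <= f -> dec_sit_fuel f (enc_sit s) = s.
Proof.
  revert f. induction s as [|b s IH] using rev_ind; intros f Hf.
  - destruct f; reflexivity.
  - rewrite enc_sit_snoc in Hf. destruct f; [destruct b; lia|]. simpl.
    replace (enc_sit (s ++ [b]) =? 0) with false
      by (symmetry; apply Nat.eqb_neq; rewrite enc_sit_snoc; destruct b; lia).
    rewrite enc_parent_snoc, even_enc_sit_snoc, IH; auto. destruct b; lia.
Qed.

Lemma dec_enc_sit s : dec_sit (enc_sit s) = s.
Proof. apply dec_sit_fuel_enc. lia. Qed.

Lemma enc_sit_inj s t : enc_sit s = enc_sit t -> s = t.
Proof. intros H. rewrite <- (dec_enc_sit s), <- (dec_enc_sit t), H. reflexivity. Qed.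

Definition enc_ancestor (j e : nat) : nat := Nat.iter j enc_parent e.

Lemma enc_ancestor_enc_sit j s : enc_ancestor j (enc_sit s) = enc_sit (firstn (length s - j) s).
Proof.
  revert j. induction s as [|b s IH] using rev_ind; intros j.
  - simpl. unfold enc_ancestor. induction j as [|j IHj]; simpl; [|rewrite IHj]; reflexivity.
  - rewrite length_app. simpl. destruct j as [|j].
    + rewrite Nat.sub_0_r, firstn_all2 by (rewrite length_app; simpl; lia). reflexivity.
    + unfold enc_ancestor. rewrite Nat.iter_succ_r, enc_parent_snoc. fold (enc_ancestor j (enc_sit s)).
      rewrite IH, firstn_app. replace (length s + 1 - S j - length s) with 0 by lia.
      simpl. rewrite app_nil_r. do 2 f_equal. lia.
Qed.

Definition enc_length (e : nat) : nat := count_below (S e) (fun j => 0 <? enc_ancestor j e).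

Lemma enc_length_enc_sit s : enc_length (enc_sit s) = length s.
Proof.
  unfold enc_length. rewrite (count_below_ext _ _ (fun j => j <? length s)).
  - rewrite count_below_lt. pose proof (length_le_enc_sit s). lia.
  - intros j _. rewrite enc_ancestor_enc_sit. destruct (Nat.ltb_spec j (length s)).
    + apply Nat.ltb_lt, enc_sit_pos. intros E. apply (f_equal (@length bool)) in E.
      rewrite length_firstn in E. simpl in E. lia.
    + replace (length s - j) with 0 by lia. reflexivity.
Qed.

Lemma recursive_enc_parent : recursive1 enc_parent.
Proof.
  apply (recursive_fn_comp1 Nat.div2); [apply recursive_div2|].
  apply (recursive_fn_comp2 Nat.sub);
    [apply recursive_sub | apply recursive_proj; lia | apply recursive_const].
Qed.

Lemma recursive_enc_ancestor : recursive2 enc_ancestor.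
Proof.
  eapply recursive2_ext.
  - apply (recursive_iter_param (fun x => x) (fun m r x => enc_parent r)); [apply recursive_proj; lia|].
    apply (recursive_fn_comp1 enc_parent); [apply recursive_enc_parent | apply recursive_proj; lia].
  - intros j e. unfold enc_ancestor. induction j as [|j IH]; simpl; congruence.
Qed.

Lemma recursive_enc_length : recursive1 enc_length.
Proof.
  apply (recursive_count 1 (fun w => 0 <? enc_ancestor (nth 0 w 0) (nth 1 w 0))
           (fun v => S (nth 0 v 0))).
  - apply (recursive_leb 2 (fun _ => 1)); [apply recursive_const|].
    apply (recursive_fn_comp2 enc_ancestor); [apply recursive_enc_ancestor | apply recursive_proj; lia ..].
  - apply (recursive_fn_comp1 S); [apply recursive_succ | apply recursive_proj; lia].
Qed.

Lemma recursive_bool_code_iff (g : sit -> bool) :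
  recursive_bool enc_S g <-> recursive_pred1 (fun e => g (dec_sit e)).
Proof.
  split; intros [p Hp]; exists p.
  - intros [|e []] Hv; try discriminate.
    specialize (Hp (dec_sit e)). unfold enc_S in Hp. rewrite enc_dec_sit in Hp. exact Hp.
  - intros s. specialize (Hp [enc_sit s] eq_refl). simpl in Hp. rewrite dec_enc_sit in Hp. exact Hp.
Qed.

Definition code_one : nat := 3.

Definition scale_code (M c : nat) : nat :=
  Cantor.to_nat (unpair_fst c, (unpair_snd c + 1) * M - 1).

(* [decQ c] is [zig (unpair_fst c) / (unpair_snd c + 1)], and [zig] is negative exactly on
   odd numbers. *)
Definition code_ge_frac (tn td c : nat) : bool :=
  Nat.even (unpair_fst c) && (tn * (unpair_snd c + 1) <=? Nat.div2 (unpair_fst c) * td).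

Definition code_le_frac (tn td c : nat) : bool :=
  negb (Nat.even (unpair_fst c)) || (Nat.div2 (unpair_fst c) * td <=? tn * (unpair_snd c + 1)).

Lemma recursive_scale_code M : recursive1 (scale_code M).
Proof.
  apply (recursive_fn_comp2 (fun x y => Cantor.to_nat (x, y))); [apply recursive_cantor_pair | |].
  - apply (recursive_fn_comp1 unpair_fst); [apply recursive_unpair_fst | apply recursive_proj; lia].
  - apply (recursive_fn_comp2 Nat.sub); [apply recursive_sub | | apply recursive_const].
    apply (recursive_fn_comp2 Nat.mul); [apply recursive_mul | | apply recursive_const].
    apply (recursive_fn_comp2 Nat.add); [apply recursive_add | | apply recursive_const].
    apply (recursive_fn_comp1 unpair_snd); [apply recursive_unpair_snd | apply recursive_proj; lia].
Qed.

Lemma recursive_code_ge_frac tn td : recursive_pred1 (code_ge_frac tn td).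
Proof.
  apply recursive_andb.
  - apply (recursive_pred_comp1 Nat.even); [apply recursive_even|].
    apply (recursive_fn_comp1 unpair_fst); [apply recursive_unpair_fst | apply recursive_proj; lia].
  - apply recursive_leb.
    + apply (recursive_fn_comp2 Nat.mul); [apply recursive_mul | apply recursive_const |].
      apply (recursive_fn_comp2 Nat.add); [apply recursive_add | | apply recursive_const].
      apply (recursive_fn_comp1 unpair_snd); [apply recursive_unpair_snd | apply recursive_proj; lia].
    + apply (recursive_fn_comp2 Nat.mul); [apply recursive_mul | | apply recursive_const].
      apply (recursive_fn_comp1 Nat.div2); [apply recursive_div2|].
      apply (recursive_fn_comp1 unpair_fst); [apply recursive_unpair_fst | apply recursive_proj; lia].
Qed.

Lemma recursive_code_le_frac tn td : recursive_pred1 (code_le_frac tn td).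
Proof.
  apply recursive_orb.
  - apply recursive_negb, (recursive_pred_comp1 Nat.even); [apply recursive_even|].
    apply (recursive_fn_comp1 unpair_fst); [apply recursive_unpair_fst | apply recursive_proj; lia].
  - apply recursive_leb.
    + apply (recursive_fn_comp2 Nat.mul); [apply recursive_mul | | apply recursive_const].
      apply (recursive_fn_comp1 Nat.div2); [apply recursive_div2|].
      apply (recursive_fn_comp1 unpair_fst); [apply recursive_unpair_fst | apply recursive_proj; lia].
    + apply (recursive_fn_comp2 Nat.mul); [apply recursive_mul | apply recursive_const |].
      apply (recursive_fn_comp2 Nat.add); [apply recursive_add | | apply recursive_const].
      apply (recursive_fn_comp1 unpair_snd); [apply recursive_unpair_snd | apply recursive_proj; lia].
Qed.

Open Scope R_scope.

Definition zigR (x : nat) : R :=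
  if Nat.even x then INR (Nat.div2 x) else - INR (Nat.div2 (S x)).

Lemma Q2R_zig_frac a b : Q2R (Qmake (zig a) (Pos.of_succ_nat b)) = zigR a / (INR b + 1).
Proof.
  unfold Q2R. simpl. rewrite Zpos_P_of_succ_nat, succ_IZR, <- INR_IZR_INZ.
  unfold zig, zigR. destruct (Nat.even a).
  - rewrite <- INR_IZR_INZ. reflexivity.
  - rewrite opp_IZR, <- INR_IZR_INZ. reflexivity.
Qed.

Lemma Q2R_decQ c : Q2R (decQ c) = zigR (unpair_fst c) / (INR (unpair_snd c) + 1).
Proof. unfold decQ. rewrite cantor_of_nat_unpair. apply Q2R_zig_frac. Qed.

Lemma Q2R_decQ_code_one : Q2R (decQ code_one) = 1.
Proof.
  unfold code_one. rewrite Q2R_decQ. replace (unpair_fst 3) with 2%nat by reflexivity.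
  replace (unpair_snd 3) with 0%nat by reflexivity. unfold zigR. simpl. lra.
Qed.

Lemma Q2R_decQ_scale_code M c : (1 <= M)%nat -> Q2R (decQ (scale_code M c)) = Q2R (decQ c) / INR M.
Proof.
  intros HM. unfold scale_code, decQ at 1. rewrite Cantor.cancel_of_to, Q2R_zig_frac, Q2R_decQ.
  assert (HMpos : 0 < INR M) by (apply lt_0_INR; lia).
  replace (INR ((unpair_snd c + 1) * M - 1) + 1) with ((INR (unpair_snd c) + 1) * INR M).
  - pose proof (pos_INR (unpair_snd c)). field. lra.
  - rewrite <- (S_INR ((unpair_snd c + 1) * M - 1)).
    replace (S ((unpair_snd c + 1) * M - 1)) with ((unpair_snd c + 1) * M)%nat by nia.
    rewrite mult_INR, plus_INR. simpl. ring.
Qed.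

Lemma zigR_even x : Nat.even x = true -> zigR x = INR (Nat.div2 x).
Proof. unfold zigR. intros ->. reflexivity. Qed.

Lemma zigR_odd_neg x : Nat.even x = false -> zigR x < 0.
Proof.
  unfold zigR. intros H. rewrite H. destruct x as [|x]; [discriminate|].
  change (Nat.div2 (S (S x))) with (S (Nat.div2 x)). rewrite S_INR.
  pose proof (pos_INR (Nat.div2 x)). lra.
Qed.

Lemma Rdiv_le_cross a b c d : 0 < b -> 0 < d -> (a / b <= c / d <-> a * d <= c * b).
Proof.
  intros Hb Hd.
  replace (a * d) with (a / b * (b * d)) by (field; lra).
  replace (c * b) with (c / d * (b * d)) by (field; lra).
  split; intros H.
  - apply Rmult_le_compat_r; [nra | exact H].
  - apply Rmult_le_reg_r with (b * d); [nra | exact H].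
Qed.

Lemma INR_le_iff n m : INR n <= INR m <-> (n <= m)%nat.
Proof. split; [apply INR_le | apply le_INR]. Qed.

Lemma code_ge_frac_spec tn td c : (0 < tn)%nat -> (0 < td)%nat ->
  code_ge_frac tn td c = true <-> INR tn / INR td <= Q2R (decQ c).
Proof.
  intros Htn Htd. unfold code_ge_frac. rewrite Q2R_decQ.
  pose proof (pos_INR (unpair_snd c)).
  assert (0 < INR td) by (apply lt_0_INR; lia). assert (0 < INR tn) by (apply lt_0_INR; lia).
  rewrite Bool.andb_true_iff, Nat.leb_le. destruct (Nat.even (unpair_fst c)) eqn:E.
  - rewrite zigR_even, Rdiv_le_cross by (auto; lra).
    rewrite <- (INR_le_iff (tn * _) _), !mult_INR, plus_INR. simpl. intuition lra.
  - pose proof (zigR_odd_neg _ E).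
    assert (zigR (unpair_fst c) / (INR (unpair_snd c) + 1) < 0) by (apply Rdiv_neg_pos; lra).
    assert (0 < INR tn / INR td) by (apply Rdiv_lt_0_compat; lra).
    intuition (try discriminate; lra).
Qed.

Lemma code_le_frac_spec tn td c : (0 < td)%nat ->
  code_le_frac tn td c = true <-> Q2R (decQ c) <= INR tn / INR td.
Proof.
  intros Htd. unfold code_le_frac. rewrite Q2R_decQ.
  pose proof (pos_INR (unpair_snd c)). pose proof (pos_INR tn).
  assert (0 < INR td) by (apply lt_0_INR; lia).
  destruct (Nat.even (unpair_fst c)) eqn:E; simpl.
  - rewrite Nat.leb_le, zigR_even, Rdiv_le_cross by (auto; lra).
    rewrite <- (INR_le_iff (_ * td) _), !mult_INR, plus_INR. simpl. intuition lra.
  - pose proof (zigR_odd_neg _ E).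
    assert (zigR (unpair_fst c) / (INR (unpair_snd c) + 1) < 0) by (apply Rdiv_neg_pos; lra).
    assert (0 <= INR tn / INR td) by (apply Rdiv_le_0_compat; lra).
    intuition lra.
Qed.

Close Scope R_scope.

Definition approximates {D : Type} (enc : D -> list nat) (g : D -> nat -> nat) : Prop :=
  exists p, forall d n, eval p (enc d ++ [n]) (g d n).

Lemma approximates_scale_code {D : Type} (enc : D -> list nat) g M :
  approximates enc g -> approximates enc (fun d n => scale_code M (g d n)).
Proof.
  intros [p Hp]. destruct (recursive_scale_code M) as [q Hq].
  exists (PComp q [p]). intros d n. econstructor.
  - constructor; [apply Hp | constructor].
  - exact (Hq [g d n] eq_refl).
Qed.

Lemma approximates_sit_iff g : approximates enc_S g <-> recursive2 (fun e n => g (dec_sit e) n).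
Proof.
  split; intros [p Hp]; exists p.
  - intros [|e [|n []]] Hv; try discriminate.
    specialize (Hp (dec_sit e) n). unfold enc_S in Hp. rewrite enc_dec_sit in Hp. exact Hp.
  - intros s n. specialize (Hp [enc_sit s; n] eq_refl). simpl in Hp.
    rewrite dec_enc_sit in Hp. exact Hp.
Qed.

Lemma approximates_guard_reindex bc fc g : recursive_pred1 bc -> recursive1 fc ->
  approximates enc_S g ->
  approximates enc_S (fun s n => if bc (enc_sit s) then g (dec_sit (fc (enc_sit s))) n else code_one).
Proof.
  rewrite !approximates_sit_iff. intros Hb Hf Hg.
  apply (recursive_fn_ext 2
           (fun v => if bc (nth 0 v 0) then g (dec_sit (fc (nth 0 v 0))) (nth 1 v 0) else code_one)).
  - apply recursive_ite; [| | apply recursive_const].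
    + apply (recursive_pred_comp1 bc); [exact Hb | apply recursive_proj; lia].
    + apply (recursive_fn_comp2 (fun e n => g (dec_sit e) n)); [exact Hg | | apply recursive_proj; lia].
      apply (recursive_fn_comp1 fc); [exact Hf | apply recursive_proj; lia].
  - intros v _. rewrite enc_dec_sit. reflexivity.
Qed.

Lemma approximates_SX_guard bc g : recursive_pred1 bc -> approximates enc_SX g ->
  approximates enc_SX (fun sx n => if bc (enc_sit (fst sx)) then g sx n else code_one).
Proof.
  intros Hb [p Hp].
  (* [p] is only specified on inputs whose middle entry is 0 or 1, so that entry is normalised. *)
  assert (Hg : recursive_fn 3 (fun v => g (dec_sit (nth 0 v 0), 1 <=? nth 1 v 0) (nth 2 v 0))).
  { destruct (recursive_leb 3 (fun _ => 1) (fun v => nth 1 v 0) (recursive_const 1 3)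
                 (recursive_proj 1 3 ltac:(lia))) as [q Hq].
    exists (PComp p [PProj 0; q; PProj 2]). intros v Hv.
    econstructor; [repeat constructor; try lia; apply Hq, Hv|].
    specialize (Hp (dec_sit (nth 0 v 0), 1 <=? nth 1 v 0) (nth 2 v 0)).
    unfold enc_SX in Hp. cbn [fst snd app] in Hp. rewrite enc_dec_sit in Hp.
    destruct (1 <=? nth 1 v 0); exact Hp. }
  assert (Hite : recursive_fn 3 (fun v => if bc (nth 0 v 0)
                   then g (dec_sit (nth 0 v 0), 1 <=? nth 1 v 0) (nth 2 v 0) else code_one)).
  { apply recursive_ite; [| exact Hg | apply recursive_const].
    apply (recursive_pred_comp1 bc); [exact Hb | apply recursive_proj; lia]. }
  destruct Hite as [q Hq]. exists q. intros [s x] n.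
  specialize (Hq [enc_sit s; Nat.b2n x; n] eq_refl). cbn [nth fst snd] in Hq.
  rewrite dec_enc_sit in Hq. unfold enc_SX. destruct x; exact Hq.
Qed.

Open Scope R_scope.

Lemma computable_div_nat {D : Type} (enc : D -> list nat) (r : D -> R) M : (1 <= M)%nat ->
  computable enc r -> computable enc (fun d => r d / INR M).
Proof.
  intros HM [p [g Hg]].
  destruct (approximates_scale_code enc g M (ex_intro _ p (fun d n => proj1 (Hg d n)))) as [q Hq].
  exists q, (fun d n => scale_code M (g d n)). intros d n. split; [apply Hq|].
  rewrite Q2R_decQ_scale_code by exact HM.
  assert (HMge : 1 <= INR M) by (apply (le_INR 1); exact HM).
  replace (r d / INR M - Q2R (decQ (g d n)) / INR M) with ((r d - Q2R (decQ (g d n))) / INR M)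
    by (field; lra).
  rewrite Rabs_div, (Rabs_right (INR M)) by lra.
  apply Rle_lt_trans with (Rabs (r d - Q2R (decQ (g d n)))); [|apply Hg].
  apply Rcomplements.Rle_div_l; [lra|]. pose proof (Rabs_pos (r d - Q2R (decQ (g d n)))). nra.
Qed.

Lemma lower_semicomputable_div_nat {D : Type} (enc : D -> list nat) (r : D -> R) M : (1 <= M)%nat ->
  lower_semicomputable enc r -> lower_semicomputable enc (fun d => r d / INR M).
Proof.
  intros HM [p [g [Hp [Hmono Hlim]]]].
  destruct (approximates_scale_code enc g M (ex_intro _ p Hp)) as [q Hq].
  assert (HMinv : 0 < / INR M) by (apply Rinv_0_lt_compat, lt_0_INR; lia).
  exists q, (fun d n => scale_code M (g d n)). split; [exact Hq | split].
  - intros d n. rewrite !Q2R_decQ_scale_code by exact HM.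
    apply Rmult_le_compat_r; [lra | apply Hmono].
  - intros d. eapply is_lim_seq_ext; [|exact (is_lim_seq_scal_r _ (/ INR M) _ (Hlim d))].
    intros n. rewrite Q2R_decQ_scale_code by exact HM. reflexivity.
Qed.

Lemma computable_guard_reindex bc fc T : recursive_pred1 bc -> recursive1 fc ->
  computable enc_S T ->
  computable enc_S (fun s => if bc (enc_sit s) then T (dec_sit (fc (enc_sit s))) else 1).
Proof.
  intros Hb Hf [p [g Hg]].
  destruct (approximates_guard_reindex bc fc g Hb Hf (ex_intro _ p (fun d n => proj1 (Hg d n))))
    as [q Hq].
  eexists q, _. intros s n. split; [apply Hq|]. cbv beta.
  destruct (bc (enc_sit s)); [apply Hg|].
  rewrite Q2R_decQ_code_one, Rminus_diag, Rabs_R0. apply Rinv_0_lt_compat, pow_lt. lra.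
Qed.

Lemma lower_semicomputable_guard_reindex bc fc T : recursive_pred1 bc -> recursive1 fc ->
  lower_semicomputable enc_S T ->
  lower_semicomputable enc_S (fun s => if bc (enc_sit s) then T (dec_sit (fc (enc_sit s))) else 1).
Proof.
  intros Hb Hf [p [g [Hp [Hmono Hlim]]]].
  destruct (approximates_guard_reindex bc fc g Hb Hf (ex_intro _ p Hp)) as [q Hq].
  eexists q, _. split; [exact Hq | split].
  - intros s n. cbv beta. destruct (bc (enc_sit s)); [apply Hmono | lra].
  - intros s. cbv beta. destruct (bc (enc_sit s)); [apply Hlim|].
    eapply is_lim_seq_ext; [|apply is_lim_seq_const]. intros n. rewrite Q2R_decQ_code_one. reflexivity.
Qed.

Lemma lower_semicomputable_SX_guard bc (D : sit -> bool -> R) : recursive_pred1 bc ->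
  lower_semicomputable enc_SX (fun sx => D (fst sx) (snd sx)) ->
  lower_semicomputable enc_SX (fun sx => if bc (enc_sit (fst sx)) then D (fst sx) (snd sx) else 1).
Proof.
  intros Hb [p [g [Hp [Hmono Hlim]]]].
  destruct (approximates_SX_guard bc g Hb (ex_intro _ p Hp)) as [q Hq].
  eexists q, _. split; [exact Hq | split].
  - intros sx n. cbv beta. destruct (bc (enc_sit (fst sx))); [apply Hmono | lra].
  - intros sx. cbv beta. destruct (bc (enc_sit (fst sx))); [apply Hlim|].
    eapply is_lim_seq_ext; [|apply is_lim_seq_const]. intros n. rewrite Q2R_decQ_code_one. reflexivity.
Qed.

Close Scope R_scope.

(** * Freezing a process outside a good region *)

Section Freeze.

Variables (σ : sit) (good : sit -> bool).

(* For [s] extending [σ], [frozen s] is the shortest prefix of [s] of length at least [|σ|]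
   that fails [good], or [s] itself if there is none; it is located by counting the prefixes that
   pass the test all the way from [σ]. *)
Definition extends_code (e : nat) : bool :=
  (length σ <=? enc_length e) && (enc_ancestor (enc_length e - length σ) e =? enc_sit σ).
Definition good_beyond_code (e : nat) : bool :=
  extends_code e &&
  (count_below (enc_length e - length σ + 1) (fun j => negb (good (dec_sit (enc_ancestor j e)))) =? 0).
Definition good_count_code (e : nat) : nat :=
  count_below (enc_length e) (fun k => good_beyond_code (enc_ancestor (enc_length e - k) e)).
Definition frozen_code (e : nat) : nat :=
  enc_ancestor (enc_length e - (length σ + good_count_code e)) e.

Definition extends (s : sit) : bool := extends_code (enc_sit s).
Definition good_beyond (s : sit) : bool := good_beyond_code (enc_sit s).
Definition good_count (s : sit) : nat := good_count_code (enc_sit s).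
Definition frozen (s : sit) : sit := dec_sit (frozen_code (enc_sit s)).

Lemma extends_iff s : extends s = true <-> length σ <= length s /\ firstn (length σ) s = σ.
Proof.
  unfold extends, extends_code.
  rewrite enc_length_enc_sit, enc_ancestor_enc_sit, Bool.andb_true_iff, Nat.leb_le, Nat.eqb_eq.
  split; intros [H1 H2]; split; auto;
    replace (length s - (length s - length σ)) with (length σ) in * by lia.
  - apply enc_sit_inj. exact H2.
  - rewrite H2. reflexivity.
Qed.

Lemma good_beyond_iff s :
  good_beyond s = true <->
  (length σ <= length s /\ firstn (length σ) s = σ) /\
  (forall k, length σ <= k <= length s -> good (firstn k s) = true).
Proof.
  unfold good_beyond, good_beyond_code. rewrite Bool.andb_true_iff.
  fold (extends s). rewrite extends_iff, Nat.eqb_eq, count_below_zero, enc_length_enc_sit.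
  split; intros [H1 H2]; split; auto.
  - intros k Hk. specialize (H2 (length s - k) ltac:(lia)).
    rewrite enc_ancestor_enc_sit, dec_enc_sit in H2.
    replace (length s - (length s - k)) with k in H2 by lia. destruct (good _); auto.
  - intros j Hj. rewrite enc_ancestor_enc_sit, dec_enc_sit, H2 by lia. reflexivity.
Qed.

Lemma good_beyond_extends s : good_beyond s = true -> extends s = true.
Proof. intros H. apply extends_iff. apply good_beyond_iff in H. tauto. Qed.

Lemma good_beyond_good s : good_beyond s = true -> good s = true.
Proof.
  intros H. apply good_beyond_iff in H. destruct H as [[H1 _] H2].
  rewrite <- (firstn_all s). apply H2. lia.
Qed.

Lemma good_beyond_firstn s k : good_beyond s = true -> length σ <= k <= length s ->
  good_beyond (firstn k s) = true.
Proof.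
  intros H Hk. apply good_beyond_iff in H. destruct H as [[H1 H2] H3].
  apply good_beyond_iff. rewrite length_firstn, !firstn_firstn.
  split; [split|].
  - lia.
  - rewrite <- H2 at 2. f_equal. lia.
  - intros k' Hk'. rewrite firstn_firstn. apply H3. lia.
Qed.

Lemma good_count_spec s : good_count s = count_below (length s) (fun k => good_beyond (firstn k s)).
Proof.
  unfold good_count, good_count_code. rewrite enc_length_enc_sit. apply count_below_ext.
  intros k Hk. rewrite enc_ancestor_enc_sit. unfold good_beyond. do 3 f_equal. lia.
Qed.

Lemma good_count_le s : good_count s <= length s - length σ.
Proof.
  rewrite good_count_spec, <- count_below_ge. apply count_below_mono.
  intros k Hk H. apply good_beyond_iff in H. rewrite length_firstn in H. apply Nat.leb_le. lia.
Qed.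

Lemma good_count_good_beyond s : good_beyond s = true -> good_count s = length s - length σ.
Proof.
  intros H. rewrite good_count_spec, <- count_below_ge. apply count_below_ext. intros k Hk.
  destruct (Nat.leb_spec (length σ) k).
  - apply good_beyond_firstn; auto. lia.
  - destruct (good_beyond (firstn k s)) eqn:E; auto. apply good_beyond_iff in E.
    rewrite length_firstn in E. lia.
Qed.

Lemma good_count_snoc s x : good_count (s ++ [x]) = good_count s + Nat.b2n (good_beyond s).
Proof.
  rewrite !good_count_spec, length_app, Nat.add_1_r. cbn [count_below].
  rewrite firstn_snoc_le, firstn_all by lia. f_equal.
  apply count_below_ext. intros k Hk. rewrite firstn_snoc_le by lia. reflexivity.
Qed.

Lemma frozen_spec s : extends s = true -> frozen s = firstn (length σ + good_count s) s.
Proof.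
  intros He. apply extends_iff in He. pose proof (good_count_le s).
  unfold frozen, frozen_code. rewrite enc_length_enc_sit, enc_ancestor_enc_sit, dec_enc_sit.
  fold (good_count s). f_equal. lia.
Qed.

Lemma frozen_good_beyond s : good_beyond s = true -> frozen s = s.
Proof.
  intros H. rewrite frozen_spec, good_count_good_beyond by auto using good_beyond_extends.
  apply good_beyond_iff in H. apply firstn_all2. lia.
Qed.

Lemma extends_snoc s x : extends s = true -> extends (s ++ [x]) = true.
Proof.
  intros [Hlen Hpre]%extends_iff. apply extends_iff.
  rewrite length_app, firstn_snoc_le by exact Hlen. simpl. split; [lia | exact Hpre].
Qed.

Lemma frozen_snoc_stuck s x : extends s = true -> good_beyond s = false ->
  frozen (s ++ [x]) = frozen s.
Proof.
  intros He Ha. rewrite !frozen_spec, good_count_snoc, Ha by auto using extends_snoc.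
  pose proof (good_count_le s). apply extends_iff in He.
  simpl. rewrite Nat.add_0_r, firstn_snoc_le by lia. reflexivity.
Qed.

Lemma frozen_snoc_good s x : good_beyond s = true -> frozen (s ++ [x]) = s ++ [x].
Proof.
  intros Ha. pose proof (good_beyond_extends _ Ha) as He.
  rewrite frozen_spec, good_count_snoc, Ha, good_count_good_beyond by auto using extends_snoc.
  apply extends_iff in He. apply firstn_all2. rewrite length_app. simpl. lia.
Qed.

Lemma extends_short s : length s < length σ -> extends s = false.
Proof.
  intros H. destruct (extends s) eqn:E; auto. apply extends_iff in E. lia.
Qed.

Lemma extends_snoc_false s x : length σ <= length s -> extends s = false ->
  extends (s ++ [x]) = false.
Proof.
  intros Hl H. destruct (extends (s ++ [x])) eqn:E; auto.
  apply extends_iff in E. rewrite firstn_snoc_le in E by lia.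
  destruct E as [_ Hpre]. assert (extends s = true) by (apply extends_iff; auto). congruence.
Qed.

Lemma extends_snoc_short s x : length s < length σ -> extends (s ++ [x]) = true -> s ++ [x] = σ.
Proof.
  intros Hl H. apply extends_iff in H. rewrite length_app in H. simpl in H.
  destruct H as [H1 H2]. rewrite firstn_all2 in H2 by (rewrite length_app; simpl; lia). exact H2.
Qed.

Lemma frozen_self : frozen σ = σ.
Proof.
  pose proof (good_count_le σ). rewrite frozen_spec.
  - apply firstn_all2. lia.
  - apply extends_iff. split; [lia | apply firstn_all].
Qed.

End Freeze.

Section FreezeRecursive.

Variables (σ : sit) (good : sit -> bool).
Hypothesis good_rec : recursive_bool enc_S good.

Lemma recursive_extends_code : recursive_pred1 (extends_code σ).
Proof.
  apply recursive_andb.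
  - apply recursive_leb; [apply recursive_const|].
    apply (recursive_fn_comp1 enc_length); [apply recursive_enc_length | apply recursive_proj; lia].
  - apply recursive_eqb; [|apply recursive_const].
    apply (recursive_fn_comp2 enc_ancestor); [apply recursive_enc_ancestor | | apply recursive_proj; lia].
    apply (recursive_fn_comp2 Nat.sub); [apply recursive_sub | | apply recursive_const].
    apply (recursive_fn_comp1 enc_length); [apply recursive_enc_length | apply recursive_proj; lia].
Qed.

Lemma recursive_good_beyond_code : recursive_pred1 (good_beyond_code σ good).
Proof.
  apply recursive_andb; [apply recursive_extends_code|].
  apply recursive_eqb; [|apply recursive_const].
  apply (recursive_count 1 (fun w => negb (good (dec_sit (enc_ancestor (nth 0 w 0) (nth 1 w 0)))))
           (fun v => enc_length (nth 0 v 0) - length σ + 1)).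
  - apply recursive_negb, (recursive_pred_comp1 (fun e => good (dec_sit e)));
      [apply recursive_bool_code_iff, good_rec|].
    apply (recursive_fn_comp2 enc_ancestor); [apply recursive_enc_ancestor | apply recursive_proj; lia ..].
  - apply (recursive_fn_comp2 Nat.add); [apply recursive_add | | apply recursive_const].
    apply (recursive_fn_comp2 Nat.sub); [apply recursive_sub | | apply recursive_const].
    apply (recursive_fn_comp1 enc_length); [apply recursive_enc_length | apply recursive_proj; lia].
Qed.

Lemma recursive_frozen_code : recursive1 (frozen_code σ good).
Proof.
  assert (Hlen : recursive_fn 1 (fun v => enc_length (nth 0 v 0))).
  { apply (recursive_fn_comp1 enc_length); [apply recursive_enc_length | apply recursive_proj; lia]. }
  assert (Hcount : recursive1 (good_count_code σ good)).
  { apply (recursive_count 1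
      (fun w => good_beyond_code σ good (enc_ancestor (enc_length (nth 1 w 0) - nth 0 w 0) (nth 1 w 0)))
      (fun v => enc_length (nth 0 v 0)) ); [|exact Hlen].
    apply (recursive_pred_comp1 (good_beyond_code σ good)); [apply recursive_good_beyond_code|].
    apply (recursive_fn_comp2 enc_ancestor); [apply recursive_enc_ancestor | | apply recursive_proj; lia].
    apply (recursive_fn_comp2 Nat.sub); [apply recursive_sub | | apply recursive_proj; lia].
    apply (recursive_fn_comp1 enc_length); [apply recursive_enc_length | apply recursive_proj; lia]. }
  apply (recursive_fn_comp2 enc_ancestor); [apply recursive_enc_ancestor | | apply recursive_proj; lia].
  apply (recursive_fn_comp2 Nat.sub); [apply recursive_sub | exact Hlen |].
  apply (recursive_fn_comp2 Nat.add); [apply recursive_add | apply recursive_const |].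
  apply (recursive_fn_comp1 (good_count_code σ good)); [exact Hcount | apply recursive_proj; lia].
Qed.

End FreezeRecursive.

Open Scope R_scope.

Definition freeze_test (σ : sit) (good : sit -> bool) (M : nat) (T : sit -> R) (s : sit) : R :=
  if extends σ s then T (frozen σ good s) / INR M else 1.

Definition freeze_mult (σ : sit) (good : sit -> bool) (D : sit -> bool -> R) (s : sit) (x : bool)
  : R :=
  if good_beyond σ good s then D s x else 1.

Lemma mixture_le_0 p a b v : 0 <= p <= 1 -> a <= v -> b <= v -> p * (a - v) + (1 - p) * (b - v) <= 0.
Proof. intros. nra. Qed.

Lemma mprod_aux_snoc D s x k : (k <= length s)%nat -> mprod_aux D (s ++ [x]) k = mprod_aux D s k.
Proof.
  induction k as [|k IH]; intros Hk; simpl; auto.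
  rewrite IH, firstn_snoc_le, app_nth1 by lia. reflexivity.
Qed.

Lemma mprod_snoc D s x : mprod D (s ++ [x]) = mprod D s * D s x.
Proof.
  unfold mprod. rewrite length_app, Nat.add_1_r. simpl.
  rewrite mprod_aux_snoc, firstn_snoc_le, firstn_all, app_nth2, Nat.sub_diag by lia. reflexivity.
Qed.

Section FreezeSupermartingales.

Variables (lo hi : sit -> R) (c d : R) (σ : sit) (good : sit -> bool).
Hypothesis fs : forecasting_system lo hi.
Hypothesis good_bounds : forall s, good s = true -> c <= lo s /\ hi s <= d.

Lemma freeze_test_supermartingale M T : (1 <= length σ)%nat -> (1 <= M)%nat ->
  test_supermartingale (fun _ => c) (fun _ => d) T -> T σ <= INR M ->
  test_supermartingale lo hi (freeze_test σ good M T).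
Proof.
  intros Hσ HM [HTsup [HTpos HT0]] HTσ.
  assert (HMpos : 0 < INR M) by (apply lt_0_INR; lia).
  split; [|split].
  - intros s p Hp. assert (Hp01 : 0 <= p <= 1) by (destruct (fs s); lra). unfold freeze_test.
    destruct (extends σ s) eqn:Es.
    + rewrite (extends_snoc _ _ true Es), (extends_snoc _ _ false Es).
      destruct (good_beyond σ good s) eqn:Eg.
      * rewrite (frozen_snoc_good _ _ _ true Eg), (frozen_snoc_good _ _ _ false Eg),
          (frozen_good_beyond _ _ _ Eg).
        pose proof (good_bounds _ (good_beyond_good _ _ _ Eg)).
        specialize (HTsup s p ltac:(lra)).
        replace (p * (T (s ++ [true]) / INR M - T s / INR M)
                 + (1 - p) * (T (s ++ [false]) / INR M - T s / INR M))
          with ((p * (T (s ++ [true]) - T s) + (1 - p) * (T (s ++ [false]) - T s)) / INR M)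
          by (field; lra).
        apply Rcomplements.Rle_div_l; lra.
      * rewrite (frozen_snoc_stuck _ _ _ true Es Eg), (frozen_snoc_stuck _ _ _ false Es Eg). lra.
    + destruct (Nat.le_gt_cases (length σ) (length s)) as [Hlong | Hshort].
      * rewrite (extends_snoc_false _ _ true Hlong Es), (extends_snoc_false _ _ false Hlong Es). lra.
      * (* the only extending child is σ itself, where the value T σ / M is at most 1 *)
        apply mixture_le_0; [exact Hp01 | ..]; destruct (extends σ (s ++ [_])) eqn:E; try lra;
          rewrite (extends_snoc_short _ _ _ Hshort E), frozen_self;
          apply Rcomplements.Rle_div_l; lra.
  - intros s. unfold freeze_test. destruct (extends σ s); [|lra].
    apply Rcomplements.Rdiv_le_0_compat; auto.
  - unfold freeze_test. rewrite extends_short by (simpl; lia). reflexivity.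
Qed.

Lemma freeze_mult_short D s : (length s <= length σ)%nat -> mprod (freeze_mult σ good D) s = 1.
Proof.
  induction s as [|y s IH] using rev_ind; intros Hl; [reflexivity|].
  rewrite length_app in Hl. simpl in Hl. rewrite mprod_snoc, IH by lia. unfold freeze_mult.
  destruct (good_beyond σ good s) eqn:E; [|lra].
  apply good_beyond_iff in E. lia.
Qed.

Lemma mprod_freeze_mult D s : good_beyond σ good s = true ->
  mprod D s = mprod D σ * mprod (freeze_mult σ good D) s.
Proof.
  induction s as [|y s IH] using rev_ind; intros H.
  - apply good_beyond_iff in H. destruct H as [[_ H] _]. rewrite firstn_nil in H.
    rewrite <- H. unfold mprod. simpl. ring.
  - destruct (Nat.le_gt_cases (length σ) (length s)) as [Hlong | Hshort].
    + assert (Hs : good_beyond σ good s = true).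
      { replace s with (firstn (length s) (s ++ [y]))
          by (rewrite firstn_snoc_le, firstn_all by lia; reflexivity).
        apply good_beyond_firstn; [exact H|]. rewrite length_app. simpl. lia. }
      rewrite !mprod_snoc, IH by exact Hs. unfold freeze_mult. rewrite Hs. ring.
    + pose proof H as [[H1 H2] _]%good_beyond_iff. rewrite length_app in H1. simpl in H1.
      rewrite firstn_all2 in H2 by (rewrite length_app; simpl; lia).
      rewrite H2, freeze_mult_short by lia. ring.
Qed.

Lemma freeze_mult_supermartingale D :
  test_supermartingale (fun _ => c) (fun _ => d) (mprod D) -> 0 < mprod D σ ->
  test_supermartingale lo hi (mprod (freeze_mult σ good D)).
Proof.
  intros [HDsup [HDpos HD0]] Hσpos.
  split; [|split; [|reflexivity]].
  - intros s p Hp. rewrite !mprod_snoc. destruct (good_beyond σ good s) eqn:E.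
    + assert (Hstep : forall x, freeze_mult σ good D s x = D s x)
        by (intros x; unfold freeze_mult; rewrite E; reflexivity).
      rewrite !Hstep. pose proof (good_bounds _ (good_beyond_good _ _ _ E)).
      specialize (HDsup s p ltac:(lra)).
      rewrite !mprod_snoc, (mprod_freeze_mult D s E) in HDsup.
      apply Rmult_le_reg_l with (mprod D σ); [exact Hσpos|]. rewrite Rmult_0_r.
      eapply Rle_trans; [|exact HDsup]. right. ring.
    + assert (Hstep : forall x, freeze_mult σ good D s x = 1)
        by (intros x; unfold freeze_mult; rewrite E; reflexivity).
      rewrite !Hstep. lra.
  - intros s. induction s as [|y s IH] using rev_ind; [unfold mprod; simpl; lra|].
    rewrite mprod_snoc. unfold freeze_mult at 2. destruct (good_beyond σ good s) eqn:E; [|lra].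
    pose proof (HDpos (s ++ [y])) as Hy. rewrite mprod_snoc, (mprod_freeze_mult D s E) in Hy.
    apply Rmult_le_reg_l with (mprod D σ); [exact Hσpos|]. lra.
Qed.

End FreezeSupermartingales.

Lemma freeze_test_good_beyond σ good M T s : good_beyond σ good s = true ->
  freeze_test σ good M T s = T s / INR M.
Proof.
  intros H. unfold freeze_test. rewrite (good_beyond_extends _ _ _ H), frozen_good_beyond by exact H.
  reflexivity.
Qed.

Lemma computable_freeze_test σ good M T : recursive_bool enc_S good -> (1 <= M)%nat ->
  computable enc_S T -> computable enc_S (freeze_test σ good M T).
Proof.
  intros Hgood HM HT.
  exact (computable_guard_reindex _ _ _ (recursive_extends_code σ)
           (recursive_frozen_code σ good Hgood) (computable_div_nat enc_S T M HM HT)).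
Qed.

Lemma lower_semicomputable_freeze_test σ good M T : recursive_bool enc_S good -> (1 <= M)%nat ->
  lower_semicomputable enc_S T -> lower_semicomputable enc_S (freeze_test σ good M T).
Proof.
  intros Hgood HM HT.
  exact (lower_semicomputable_guard_reindex _ _ _ (recursive_extends_code σ)
           (recursive_frozen_code σ good Hgood) (lower_semicomputable_div_nat enc_S T M HM HT)).
Qed.

Lemma lower_semicomputable_freeze_mult σ good D : recursive_bool enc_S good ->
  lower_semicomputable enc_SX (fun sx => D (fst sx) (snd sx)) ->
  lower_semicomputable enc_SX (fun sx => freeze_mult σ good D (fst sx) (snd sx)).
Proof.
  intros Hgood HD.
  exact (lower_semicomputable_SX_guard _ D (recursive_good_beyond_code σ good Hgood) HD).
Qed.

Lemma is_LimInf_seq_LimInf u : is_LimInf_seq u (LimInf_seq u).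
Proof. destruct (ex_LimInf_seq u) as [l Hl]. rewrite (is_LimInf_seq_unique _ _ Hl). exact Hl. Qed.

Lemma is_LimSup_seq_LimSup u : is_LimSup_seq u (LimSup_seq u).
Proof. destruct (ex_LimSup_seq u) as [l Hl]. rewrite (is_LimSup_seq_unique _ _ Hl). exact Hl. Qed.

Lemma LimInf_seq_finite_eventually u l eps : LimInf_seq u = Finite l -> 0 < eps ->
  eventually (fun n => l - eps < u n).
Proof.
  intros H He. pose proof (is_LimInf_seq_LimInf u) as Hl. rewrite H in Hl.
  exact (proj2 (Hl (mkposreal eps He))).
Qed.

Lemma LimSup_seq_finite_eventually u l eps : LimSup_seq u = Finite l -> 0 < eps ->
  eventually (fun n => u n < l + eps).
Proof.
  intros H He. pose proof (is_LimSup_seq_LimSup u) as Hl. rewrite H in Hl.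
  exact (proj2 (Hl (mkposreal eps He))).
Qed.

Lemma LimInf_seq_unit_interval u : (forall n, 0 <= u n <= 1) ->
  LimInf_seq u = Finite (real (LimInf_seq u)) /\ 0 <= real (LimInf_seq u) <= 1.
Proof.
  intros H.
  assert (H0 : Rbar_le (LimInf_seq (fun _ => 0)) (LimInf_seq u))
    by (apply LimInf_le; exists 0%nat; intros; apply H).
  assert (H1 : Rbar_le (LimInf_seq u) (LimInf_seq (fun _ => 1)))
    by (apply LimInf_le; exists 0%nat; intros; apply H).
  rewrite LimInf_seq_const in H0, H1. destruct (LimInf_seq u); simpl in *; tauto.
Qed.

Lemma LimSup_seq_unit_interval u : (forall n, 0 <= u n <= 1) ->
  LimSup_seq u = Finite (real (LimSup_seq u)) /\ 0 <= real (LimSup_seq u) <= 1.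
Proof.
  intros H.
  assert (H0 : Rbar_le (LimSup_seq (fun _ => 0)) (LimSup_seq u))
    by (apply LimSup_le; exists 0%nat; intros; apply H).
  assert (H1 : Rbar_le (LimSup_seq u) (LimSup_seq (fun _ => 1)))
    by (apply LimSup_le; exists 0%nat; intros; apply H).
  rewrite LimSup_seq_const in H0, H1. destruct (LimSup_seq u); simpl in *; tauto.
Qed.

Lemma LimSup_seq_scal_pos_loc a u v : 0 < a -> eventually (fun n => v n = a * u n) ->
  LimSup_seq v = Rbar_mult a (LimSup_seq u).
Proof.
  intros Ha Hev. apply is_LimSup_seq_unique.
  eapply is_LimSup_seq_ext_loc; [|exact (is_LimSup_seq_scal_pos a u _ Ha (is_LimSup_seq_LimSup u))].
  destruct Hev as [N HN]. exists N. intros n Hn. symmetry. auto.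
Qed.

Lemma Rbar_mult_pos_p_infty a : 0 < a -> Rbar_mult a p_infty = p_infty.
Proof.
  intros Ha. simpl. destruct (Rle_dec 0 a); [|lra].
  destruct (Rle_lt_or_eq_dec 0 a r); [reflexivity | lra].
Qed.

Lemma LimInf_seq_nonneg_iff u :
  Rbar_le 0 (LimInf_seq u) <-> forall eps, 0 < eps -> eventually (fun n => - eps < u n).
Proof.
  split.
  - intros H eps He. pose proof (is_LimInf_seq_LimInf u) as Hl.
    destruct (LimInf_seq u) as [l| |]; simpl in H; [|exact (Hl (- eps)) | contradiction].
    destruct (Hl (mkposreal eps He)) as [_ [N HN]]. exists N. intros n Hn.
    specialize (HN n Hn). simpl in HN. lra.
  - intros H. assert (Hk : forall eps, 0 < eps -> Rbar_le (- eps) (LimInf_seq u)).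
    { intros eps He. rewrite <- (LimInf_seq_const (- eps)). apply LimInf_le.
      destruct (H eps He) as [N HN]. exists N. intros n Hn. left. auto. }
    destruct (LimInf_seq u) as [l| |]; simpl in *; auto.
    + destruct (Rle_dec 0 l); auto. specialize (Hk (- l / 2) ltac:(lra)). lra.
    + exact (Hk 1 ltac:(lra)).
Qed.

Lemma LimSup_seq_nonpos_iff u :
  Rbar_le (LimSup_seq u) 0 <-> forall eps, 0 < eps -> eventually (fun n => u n < eps).
Proof.
  split.
  - intros H eps He. pose proof (is_LimSup_seq_LimSup u) as Hl.
    destruct (LimSup_seq u) as [l| |]; simpl in H; [|contradiction | exact (Hl eps)].
    destruct (Hl (mkposreal eps He)) as [_ [N HN]]. exists N. intros n Hn.
    specialize (HN n Hn). simpl in HN. lra.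
  - intros H. assert (Hk : forall eps, 0 < eps -> Rbar_le (LimSup_seq u) eps).
    { intros eps He. rewrite <- (LimSup_seq_const eps). apply LimSup_le.
      destruct (H eps He) as [N HN]. exists N. intros n Hn. left. auto. }
    destruct (LimSup_seq u) as [l| |]; simpl in *; auto.
    + destruct (Rle_dec l 0); auto. specialize (Hk (l / 2) ltac:(lra)). lra.
    + exact (Hk 1 ltac:(lra)).
Qed.

Lemma psum_ext f g n : (forall k, f k = g k) -> psum f n = psum g n.
Proof. intros H. induction n as [|n IH]; simpl; [reflexivity|]. rewrite IH, H. reflexivity. Qed.

Lemma psum_minus f g n : psum f n - psum g n = psum (fun k => f k - g k) n.
Proof. induction n as [|n IH]; simpl; [ring|]. rewrite <- IH. ring. Qed.

Lemma psum_le_from f N n : (N <= n)%nat -> (forall k, (N <= k)%nat -> 0 <= f k) ->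
  psum f N <= psum f n.
Proof.
  induction 1 as [|m Hm IH]; intros Hf; [lra|]. simpl.
  specialize (IH Hf). specialize (Hf m Hm). lra.
Qed.

Lemma sel_avg_sub S f g w n :
  sel_avg S f w n - sel_avg S g w n
  = psum (fun k => b2R (S (prefix w k)) * (g (prefix w k) - f (prefix w k))) n / sel_count S w n.
Proof.
  unfold sel_avg, Rdiv. rewrite <- Rmult_minus_distr_r, psum_minus. f_equal.
  apply psum_ext. intros k. ring.
Qed.

(* A bounded initial segment of the selected sum is washed out by the diverging count. *)
Lemma sel_avg_dominated S w f g :
  eventually (fun n => f (prefix w n) <= g (prefix w n)) ->
  is_lim_seq (sel_count S w) p_infty ->
  forall eps, 0 < eps -> eventually (fun n => sel_avg S g w n - eps < sel_avg S f w n).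
Proof.
  intros [N0 HN0] Hcount eps He.
  set (P n := psum (fun k => b2R (S (prefix w k)) * (g (prefix w k) - f (prefix w k))) n).
  destruct (proj2 (is_lim_seq_spec _ _) Hcount (Rmax 1 (Rabs (P N0) / eps))) as [N1 HN1].
  exists (N0 + N1)%nat. intros n Hn. specialize (HN1 n ltac:(lia)).
  set (cnt := sel_count S w n) in *.
  assert (Hcnt1 : 1 < cnt) by (eapply Rle_lt_trans; [apply Rmax_l | exact HN1]).
  assert (Hcnt2 : Rabs (P N0) < cnt * eps).
  { apply Rcomplements.Rlt_div_l; [lra|]. eapply Rle_lt_trans; [apply Rmax_r | exact HN1]. }
  assert (HP : P N0 <= P n).
  { apply psum_le_from; [lia|]. intros k Hk. specialize (HN0 k Hk).
    destruct (S (prefix w k)); simpl; lra. }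
  assert (HK : - eps < P N0 / cnt).
  { apply Rcomplements.Rlt_div_r; [lra|]. pose proof (Rle_abs (- P N0)).
    rewrite Rabs_Ropp in *. lra. }
  assert (P N0 / cnt <= P n / cnt).
  { apply Rmult_le_compat_r; [left; apply Rinv_0_lt_compat; lra | exact HP]. }
  pose proof (sel_avg_sub S f g w n). fold cnt in H0. unfold P in *. lra.
Qed.

Lemma CH_condition_transfer lo hi c d w S :
  eventually (fun n => c <= lo (prefix w n) /\ hi (prefix w n) <= d) ->
  CH_condition lo hi w S -> CH_condition (fun _ => c) (fun _ => d) w S.
Proof.
  intros Hev HCH Hcount. destruct (HCH Hcount) as [Hlo Hhi]. split.
  - apply LimInf_seq_nonneg_iff. intros eps He.
    assert (Hc : eventually (fun n => c <= lo (prefix w n))) by (revert Hev; apply filter_imp; tauto).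
    generalize (filter_and (F := eventually) _ _
                  (proj1 (LimInf_seq_nonneg_iff _) Hlo (eps / 2) ltac:(lra))
                  (sel_avg_dominated S w (fun _ => c) lo Hc Hcount (eps / 2) ltac:(lra))).
    apply filter_imp. intros n [H1 H2]. lra.
  - apply LimSup_seq_nonpos_iff. intros eps He.
    assert (Hd : eventually (fun n => hi (prefix w n) <= d)) by (revert Hev; apply filter_imp; tauto).
    generalize (filter_and (F := eventually) _ _
                  (proj1 (LimSup_seq_nonpos_iff _) Hhi (eps / 2) ltac:(lra))
                  (sel_avg_dominated S w hi (fun _ => d) Hd Hcount (eps / 2) ltac:(lra))).
    apply filter_imp. intros n [H1 H2]. lra.
Qed.

(** * A decidable good region *)

Lemma pos_frac_between a b : 0 <= a -> a < b ->
  exists tn td : nat, (0 < tn)%nat /\ (0 < td)%nat /\ a <= INR tn / INR td <= b.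
Proof.
  intros Ha Hab. destruct (archimed_cor1 (b - a)) as [td [Htd Htd0]]; [lra|].
  assert (Htdpos : 0 < INR td) by (apply lt_0_INR; lia).
  assert (Hgap : 1 < (b - a) * INR td).
  { apply Rmult_lt_reg_l with (/ INR td); [apply Rinv_0_lt_compat; lra|].
    rewrite Rmult_1_r, Rmult_comm, Rmult_assoc, Rinv_r, Rmult_1_r by lra. exact Htd. }
  destruct (nfloor_ex (a * INR td)) as [k Hk]; [nra|].
  exists (S k), td. split; [lia | split; [exact Htd0|]]. rewrite S_INR.
  split; [apply Rcomplements.Rle_div_r | apply Rcomplements.Rle_div_l]; lra.
Qed.

Lemma small_inv_pow2 eps : 0 < eps -> exists n, / 2 ^ n < eps.
Proof.
  intros He. destruct (pow_lt_1_zero (/ 2) ltac:(rewrite Rabs_pos_eq; lra) eps He) as [n Hn].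
  exists n. specialize (Hn n (le_n n)). rewrite <- pow_inv. rewrite Rabs_pos_eq in Hn; [exact Hn|].
  apply pow_le. lra.
Qed.

Lemma recursive_bool_true : recursive_bool enc_S (fun _ => true).
Proof. apply recursive_bool_code_iff, (recursive_const 1 1). Qed.

Lemma recursive_bool_andb g h : recursive_bool enc_S g -> recursive_bool enc_S h ->
  recursive_bool enc_S (fun s => g s && h s).
Proof.
  rewrite !recursive_bool_code_iff. intros Hg Hh. exact (recursive_andb 1 _ _ Hg Hh).
Qed.

Lemma recursive_bool_approx_test b g n0 : recursive_pred1 b -> approximates enc_S g ->
  recursive_bool enc_S (fun s => b (g s n0)).
Proof.
  intros Hb Hg%approximates_sit_iff. apply recursive_bool_code_iff, (recursive_pred_comp1 b).
  - exact Hb.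
  - apply (recursive_fn_comp2 (fun e n => g (dec_sit e) n));
      [exact Hg | apply recursive_proj; lia | apply recursive_const].
Qed.

Lemma lower_guard (lo : sit -> R) (w : path) (l e : R) :
  computable enc_S lo -> (forall s, 0 <= lo s) ->
  LimInf_seq (fun n => lo (prefix w n)) = Finite l -> 0 < e ->
  exists g, recursive_bool enc_S g /\ (forall s, g s = true -> Rmax (l - e) 0 <= lo s) /\
            eventually (fun n => g (prefix w n) = true).
Proof.
  intros [p [glo Hlo]] Hlo_nonneg Hl He. destruct (Rle_dec (l - e) 0) as [Hle | Hgt].
  - exists (fun _ => true). split; [apply recursive_bool_true | split].
    + intros s _. rewrite Rmax_right by exact Hle. apply Hlo_nonneg.
    + apply filter_forall. reflexivity.
  - destruct (small_inv_pow2 (e / 4)) as [n0 Hn0]; [lra|].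
    assert (Heta : 0 < / 2 ^ n0) by (apply Rinv_0_lt_compat, pow_lt; lra).
    destruct (pos_frac_between (l - e + / 2 ^ n0) (l - e / 2 - / 2 ^ n0)) as [tn [td [Htn [Htd Hq]]]];
      [lra | lra |].
    exists (fun s => code_ge_frac tn td (glo s n0)). split; [|split].
    + apply recursive_bool_approx_test; [apply recursive_code_ge_frac|].
      exists p. intros s n. apply Hlo.
    + intros s Hs. apply code_ge_frac_spec in Hs; [|exact Htn | exact Htd].
      rewrite Rmax_left by lra. destruct (Hlo s n0) as [_ Happrox]. apply Rabs_def2 in Happrox. lra.
    + generalize (LimInf_seq_finite_eventually _ _ (e / 2) Hl ltac:(lra)). apply filter_imp.
      intros n Hn. apply code_ge_frac_spec; [exact Htn | exact Htd |].
      destruct (Hlo (prefix w n) n0) as [_ Happrox]. apply Rabs_def2 in Happrox. lra.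
Qed.

Lemma upper_guard (hi : sit -> R) (w : path) (u e : R) :
  computable enc_S hi -> (forall s, hi s <= 1) ->
  LimSup_seq (fun n => hi (prefix w n)) = Finite u -> 0 <= u -> 0 < e ->
  exists g, recursive_bool enc_S g /\ (forall s, g s = true -> hi s <= Rmin (u + e) 1) /\
            eventually (fun n => g (prefix w n) = true).
Proof.
  intros [p [ghi Hhi]] Hhi_le1 Hu Hu0 He. destruct (Rle_dec 1 (u + e)) as [Hle | Hgt].
  - exists (fun _ => true). split; [apply recursive_bool_true | split].
    + intros s _. rewrite Rmin_right by exact Hle. apply Hhi_le1.
    + apply filter_forall. reflexivity.
  - destruct (small_inv_pow2 (e / 4)) as [n0 Hn0]; [lra|].
    assert (Heta : 0 < / 2 ^ n0) by (apply Rinv_0_lt_compat, pow_lt; lra).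
    destruct (pos_frac_between (u + e / 2 + / 2 ^ n0) (u + e - / 2 ^ n0)) as [tn [td [Htn [Htd Hq]]]];
      [lra | lra |].
    exists (fun s => code_le_frac tn td (ghi s n0)). split; [|split].
    + apply recursive_bool_approx_test; [apply recursive_code_le_frac|].
      exists p. intros s n. apply Hhi.
    + intros s Hs. apply code_le_frac_spec in Hs; [|exact Htd].
      rewrite Rmin_left by lra. destruct (Hhi s n0) as [_ Happrox]. apply Rabs_def2 in Happrox. lra.
    + generalize (LimSup_seq_finite_eventually _ _ (e / 2) Hu ltac:(lra)). apply filter_imp.
      intros n Hn. apply code_le_frac_spec; [exact Htd |].
      destruct (Hhi (prefix w n) n0) as [_ Happrox]. apply Rabs_def2 in Happrox. lra.
Qed.

Lemma forecast_guard lo hi w e1 e2 :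
  forecasting_system lo hi -> computable_fs lo hi -> 0 < e1 -> 0 < e2 ->
  exists good, recursive_bool enc_S good /\
    (forall s, good s = true ->
       Rmax (real (LimInf_seq (fun n => lo (prefix w n))) - e1) 0 <= lo s /\
       hi s <= Rmin (real (LimSup_seq (fun n => hi (prefix w n))) + e2) 1) /\
    eventually (fun n => good (prefix w n) = true).
Proof.
  intros Hfs [Hlo Hhi] He1 He2.
  destruct (LimInf_seq_unit_interval (fun n => lo (prefix w n))) as [Hl _].
  { intros n. destruct (Hfs (prefix w n)). lra. }
  destruct (LimSup_seq_unit_interval (fun n => hi (prefix w n))) as [Hu [Hu0 _]].
  { intros n. destruct (Hfs (prefix w n)). lra. }
  destruct (lower_guard lo w _ e1 Hlo (fun s => proj1 (Hfs s)) Hl He1) as [gl [Hgl [Hbl Hevl]]].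
  destruct (upper_guard hi w _ e2 Hhi (fun s => proj2 (proj2 (Hfs s))) Hu Hu0 He2)
    as [gh [Hgh [Hbh Hevh]]].
  exists (fun s => gl s && gh s). split; [|split].
  - apply recursive_bool_andb; assumption.
  - intros s [Hs1 Hs2]%Bool.andb_true_iff. split; auto.
  - generalize (filter_and (F := eventually) _ _ Hevl Hevh). apply filter_imp.
    intros n [-> ->]. reflexivity.
Qed.

Lemma nat_above x : exists M : nat, (1 <= M)%nat /\ x <= INR M.
Proof.
  destruct (INR_archimed 1 x) as [n Hn]; [lra|].
  exists (S n). split; [lia|]. rewrite S_INR. lra.
Qed.

Lemma prefix_snoc w n : prefix w (S n) = prefix w n ++ [w n].
Proof. unfold prefix. rewrite seq_S, map_app. reflexivity. Qed.

Lemma length_prefix w n : length (prefix w n) = n.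
Proof. unfold prefix. rewrite length_map, length_seq. reflexivity. Qed.

Lemma prefix_firstn w k n : (k <= n)%nat -> firstn k (prefix w n) = prefix w k.
Proof.
  intros Hk. unfold prefix. rewrite firstn_map. f_equal.
  replace n with (k + (n - k))%nat by lia. rewrite seq_app, firstn_app, length_seq, Nat.sub_diag.
  rewrite firstn_all2 by (rewrite length_seq; lia). simpl. apply app_nil_r.
Qed.

Section Transfer.

Variables (lo hi : sit -> R) (c d : R) (w : path) (good : sit -> bool) (N : nat).
Hypothesis fs : forecasting_system lo hi.
Hypothesis good_rec : recursive_bool enc_S good.
Hypothesis good_bounds : forall s, good s = true -> c <= lo s /\ hi s <= d.
Hypothesis good_path : forall n, (N <= n)%nat -> good (prefix w n) = true.
Hypothesis N_pos : (1 <= N)%nat.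

Lemma good_beyond_path n : (N <= n)%nat -> good_beyond (prefix w N) good (prefix w n) = true.
Proof.
  intros Hn. apply good_beyond_iff. rewrite !length_prefix.
  split; [split; [exact Hn | apply prefix_firstn, Hn]|].
  intros k Hk. rewrite prefix_firstn by lia. apply good_path. lia.
Qed.

Lemma freeze_test_path M T :
  eventually (fun n => freeze_test (prefix w N) good M T (prefix w n) = / INR M * T (prefix w n)).
Proof.
  exists N. intros n Hn. rewrite freeze_test_good_beyond by (apply good_beyond_path; exact Hn).
  unfold Rdiv. apply Rmult_comm.
Qed.

Lemma ML_random_transfer : ML_random lo hi w -> ML_random (fun _ => c) (fun _ => d) w.
Proof.
  intros Hrand [T [HTlsc [HTsup HTlim]]]. apply Hrand.
  destruct (nat_above (T (prefix w N))) as [M [HM HTM]].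
  assert (HMinv : 0 < / INR M) by (apply Rinv_0_lt_compat, lt_0_INR; lia).
  exists (freeze_test (prefix w N) good M T). split; [|split].
  - apply lower_semicomputable_freeze_test; assumption.
  - apply freeze_test_supermartingale with c d; rewrite ?length_prefix; assumption.
  - rewrite (LimSup_seq_scal_pos_loc _ _ _ HMinv (freeze_test_path M T)), HTlim.
    apply Rbar_mult_pos_p_infty, HMinv.
Qed.

Lemma C_random_transfer : C_random lo hi w -> C_random (fun _ => c) (fun _ => d) w.
Proof.
  intros Hrand [T [HTcomp [HTsup HTlim]]]. apply Hrand.
  destruct (nat_above (T (prefix w N))) as [M [HM HTM]].
  assert (HMinv : 0 < / INR M) by (apply Rinv_0_lt_compat, lt_0_INR; lia).
  exists (freeze_test (prefix w N) good M T). split; [|split].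
  - apply computable_freeze_test; assumption.
  - apply freeze_test_supermartingale with c d; rewrite ?length_prefix; assumption.
  - rewrite (LimSup_seq_scal_pos_loc _ _ _ HMinv (freeze_test_path M T)), HTlim.
    apply Rbar_mult_pos_p_infty, HMinv.
Qed.

Lemma S_random_transfer : S_random lo hi w -> S_random (fun _ => c) (fun _ => d) w.
Proof.
  intros Hrand [T [tau [HTcomp [HTsup [Htau_comp [Htau_pos [Htau_mono [Htau_unb Hlim]]]]]]]].
  apply Hrand. destruct (nat_above (T (prefix w N))) as [M [HM HTM]].
  assert (HMpos : 0 < INR M) by (apply lt_0_INR; lia).
  assert (HMinv : 0 < / INR M) by (apply Rinv_0_lt_compat; exact HMpos).
  exists (freeze_test (prefix w N) good M T), (fun n => tau n / INR M).
  split; [|split; [|split; [|split; [|split; [|split]]]]].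
  - apply computable_freeze_test; assumption.
  - apply freeze_test_supermartingale with c d; rewrite ?length_prefix; assumption.
  - apply computable_div_nat; assumption.
  - intros n. apply Rcomplements.Rdiv_le_0_compat; auto.
  - intros n m Hnm. apply Rmult_le_compat_r; [lra | auto].
  - intros x. destruct (Htau_unb (x * INR M)) as [n Hn]. exists n.
    apply Rlt_gt, Rcomplements.Rlt_div_r; [exact HMpos | exact Hn].
  - assert (Hev : eventually (fun n => freeze_test (prefix w N) good M T (prefix w n) - tau n / INR M
                                      = / INR M * (T (prefix w n) - tau n))).
    { generalize (freeze_test_path M T). apply filter_imp. intros n ->. unfold Rdiv. ring. }
    rewrite (LimSup_seq_scal_pos_loc _ _ _ HMinv Hev).
    destruct (LimSup_seq (fun n => T (prefix w n) - tau n)) as [l| |]; simpl in Hlim.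
    + simpl. apply Rmult_le_pos; lra.
    + rewrite Rbar_mult_pos_p_infty by exact HMinv. exact I.
    + contradiction.
Qed.

Lemma mprod_prefix_zero D n : mprod D (prefix w N) = 0 -> (N <= n)%nat -> mprod D (prefix w n) = 0.
Proof.
  intros H0. induction 1 as [|n Hn IH]; [exact H0|]. rewrite prefix_snoc, mprod_snoc, IH. ring.
Qed.

Lemma wML_random_transfer : wML_random lo hi w -> wML_random (fun _ => c) (fun _ => d) w.
Proof.
  intros Hrand [D [HDlsc [HDsup HDlim]]]. apply Hrand.
  assert (Hpos : 0 < mprod D (prefix w N)).
  { destruct (proj1 (proj2 HDsup) (prefix w N)) as [Hgt | Hzero]; [exact Hgt | exfalso].
    assert (Hle : Rbar_le (LimSup_seq (fun n => mprod D (prefix w n))) (LimSup_seq (fun _ => 0))).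
    { apply LimSup_le. exists N. intros n Hn. rewrite mprod_prefix_zero by auto. lra. }
    rewrite HDlim, LimSup_seq_const in Hle. exact Hle. }
  assert (Hinv : 0 < / mprod D (prefix w N)) by (apply Rinv_0_lt_compat; exact Hpos).
  exists (freeze_mult (prefix w N) good D). split; [|split].
  - apply lower_semicomputable_freeze_mult; assumption.
  - apply freeze_mult_supermartingale with c d; assumption.
  - assert (Hev : eventually (fun n => mprod (freeze_mult (prefix w N) good D) (prefix w n)
                                      = / mprod D (prefix w N) * mprod D (prefix w n))).
    { exists N. intros n Hn. rewrite (mprod_freeze_mult _ _ D _ (good_beyond_path n Hn)).
      field. lra. }
    rewrite (LimSup_seq_scal_pos_loc _ _ _ Hinv Hev), HDlim. apply Rbar_mult_pos_p_infty, Hinv.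
Qed.

End Transfer.

Theorem proposition13 (Rn : rnotion) (lo hi : sit -> R) (w : path) (e1 e2 : R) :
  forecasting_system lo hi ->
  computable_fs lo hi ->
  random Rn lo hi w ->
  0 < e1 -> 0 < e2 ->
  random Rn
    (fun _ => Rmax (real (LimInf_seq (fun n => lo (prefix w n))) - e1) 0)
    (fun _ => Rmin (real (LimSup_seq (fun n => hi (prefix w n))) + e2) 1)
    w.
Proof.
  intros Hfs Hcomp Hrand He1 He2.
  destruct (forecast_guard lo hi w e1 e2 Hfs Hcomp He1 He2) as [good [Hrec [Hbounds [N0 HN0]]]].
  assert (Hev : eventually (fun n =>
            Rmax (real (LimInf_seq (fun n => lo (prefix w n))) - e1) 0 <= lo (prefix w n) /\
            hi (prefix w n) <= Rmin (real (LimSup_seq (fun n => hi (prefix w n))) + e2) 1))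
    by (exists N0; auto).
  assert (Hpath : forall n, (S N0 <= n)%nat -> good (prefix w n) = true) by (intros; apply HN0; lia).
  assert (HN : (1 <= S N0)%nat) by lia.
  clear HN0. destruct Rn; simpl in *.
  - eapply ML_random_transfer; eauto.
  - eapply wML_random_transfer; eauto.
  - eapply C_random_transfer; eauto.
  - eapply S_random_transfer; eauto.
  - intros S HS. apply (CH_condition_transfer lo hi); [exact Hev|]. apply Hrand, HS.
  - intros S HS Htemp. apply (CH_condition_transfer lo hi); [exact Hev|]. apply Hrand; assumption.
Qed.
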